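(* Let $x\in J$ with $\|x\|_J=1$. (1) If $x$ is an extreme point of $B_J$, then $\|x|_I\|_J=\|x|_I\|_2$ for every interval $I$ of $\mathbb N$. (2) If $\{I_i\}_{i\in F}$ is an $x$-norming family and $b_i=\sum_{n\in I_i}x(n)$ for $i\in F$, then $\sum_{i\in F}b_ie_{k_i}$ is an extreme point of $B_J$ for every strictly increasing sequence $(k_i)_{i\in F}$ in $\mathbb N$.
   Context: For a real sequence $x=(x(n))_{n\in\mathbb N}$ let $\|x\|_J=\sup\bigl(\sum_{i=1}^n|\sum_{k\in I_i}x(k)|^2\bigr)^{1/2}$ over all $n$ and all families of pairwise disjoint intervals $I_1,\dots,I_n$ of $\mathbb N$ (intervals: nonempty sets of consecutive positive integers, possibly infinite). $J=\{x:\|x\|_J<\infty\}$ with unit vector basis $(e_n)$ and closed unit ball $B_J$; $\|\cdot\|_2$ is the $\ell_2$ norm; for $x\in J$ and any interval $I$ the series $\sum_{k\in I}x(k)$ converges. For $A\subset\mathbb N$, $x|_A$ equals $x$ on $A$ and $0$ off $A$. A family of intervals $\mathcal I=\{I_i\}_{i\in F}$: $F=\{1,\dots,k\}$ or $F=\mathbb N$, each $I_i$ an interval, $\max I_i<\min I_{i+1}$ whenever $i+1\in F$; it is $x$-norming if $(\sum_{i\in F}|\sum_{k\in I_i}x(k)|^2)^{1/2}=\|x\|_J$. *)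

From Stdlib Require Import Reals Lra List Arith.
From Coquelicot Require Import Coquelicot.
Open Scope R_scope.

(* Positive integers 1,2,3,... are re-indexed as 0,1,2,... (nat). *)

(* An interval of N: [a, b] (a <= b) when the second component is Some b,
   or the infinite interval [a, oo) when it is None. *)
Definition interval : Type := (nat * option nat)%type.

Definition valid_interval (I : interval) : Prop :=
  match snd I with Some b => (fst I <= b)%nat | None => True end.

Definition in_interval (I : interval) (n : nat) : bool :=
  (Nat.leb (fst I) n &&
   match snd I with Some b => Nat.leb n b | None => true end)%bool.

Definition disjoint_intervals (I J : interval) : Prop :=
  forall n, ~ (in_interval I n = true /\ in_interval J n = true).

Definition isum (x : nat -> R) (I : interval) : R :=
  match snd I with
  | Some b => sum_n_m x (fst I) b
  | None => Series (fun k => x (fst I + k)%nat)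
  end.

Definition sumsq (l : list R) : R := fold_right (fun r s => r ^ 2 + s) 0 l.

Definition Jvalues (x : nat -> R) (r : R) : Prop :=
  exists l : list interval,
    List.Forall valid_interval l /\ ForallOrdPairs disjoint_intervals l /\
    r = sqrt (sumsq (map (isum x) l)).

(* ||x||_J as an extended real (p_infty when x is not in J). *)
Definition Jnorm (x : nat -> R) : Rbar := Lub_Rbar (Jvalues x).

Definition inJ (x : nat -> R) : Prop := is_finite (Jnorm x).

Definition in_BJ (x : nat -> R) : Prop := Rbar_le (Jnorm x) (Finite 1).

Definition extreme_BJ (x : nat -> R) : Prop :=
  in_BJ x /\
  forall (u v : nat -> R) (t : R), in_BJ u -> in_BJ v -> 0 < t < 1 ->
    (forall n, x n = t * u n + (1 - t) * v n) -> u = v.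

Definition restrict (x : nat -> R) (I : interval) : nat -> R :=
  fun n => if in_interval I n then x n else 0.

Definition l2norm (x : nat -> R) : R := sqrt (Series (fun n => (x n) ^ 2)).

(* Index sets F: Some k means F = {0,...,k-1}; None means F = N. *)
Definition inF (F : option nat) (i : nat) : Prop :=
  match F with Some k => (i < k)%nat | None => True end.

Definition interval_family (F : option nat) (fam : nat -> interval) : Prop :=
  (forall i, inF F i -> valid_interval (fam i)) /\
  (forall i, inF F i -> inF F (S i) ->
     match snd (fam i) with
     | Some b => (b < fst (fam (S i)))%nat
     | None => False
     end).

Definition Fsumsq (F : option nat) (c : nat -> R) : R :=
  match F with
  | Some k => fold_right (fun i s => (c i) ^ 2 + s) 0 (seq 0 k)
  | None => Series (fun i => (c i) ^ 2)
  end.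

Definition norming_family (x : nat -> R) (F : option nat) (fam : nat -> interval) : Prop :=
  interval_family F fam /\
  Jnorm x = Finite (sqrt (Fsumsq F (fun i => isum x (fam i)))).

(* y = sum_{i in F} c_i e_{k_i} (coordinatewise) *)
Definition is_sum_basis (F : option nat) (c : nat -> R) (k : nat -> nat) (y : nat -> R) : Prop :=
  (forall i, inF F i -> y (k i) = c i) /\
  (forall n, (forall i, inF F i -> k i <> n) -> y n = 0).

From Stdlib Require Import Reals Lra Lia Psatz List Arith Permutation.
From Stdlib Require Import Classical FunctionalExtensionality.
From Coquelicot Require Import Coquelicot.
Open Scope R_scope.

(* (1) Suppose a block [p, q] of an extreme point [x] of [B_J] has
   [(sum x)^2 > sum x^2], and take it minimal, with excess [eta].  A family of
   disjoint intervals none of which covers [p, q] can be rearranged -- cut the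
   members crossing [p] and [q], and merge their outer parts into [p, q] when
   their sums have the sign of the block sum -- into a family gaining at least
   [eta]; so such families have value at most [1 - eta].  The perturbations
   [x +- delta (e_p - e_q)] leave the sums over intervals covering [p, q]
   unchanged and move the others little, so both stay in [B_J]: [x] is not
   extreme.  Hence the block sums of [x] are dominated in l2, a property
   inherited by restrictions, and for such sequences the J-norm is the l2-norm.
   (2) For a norming family, [x] vanishes off its intervals, and replacing the
   members [i0 .. i1] by their hull shows that the block sums [b_i] are again
   dominated in l2; spreading them out on unit vectors preserves this, so
   [||y||_J = ||y||_2 = 1].  Since [B_J] lies in the l2 ball, whose unit sphere
   consists of extreme points, [y] is extreme. *)

(* Coquelicot states these in an abstract monoid; over [R] they rewrite
   directly and leave goals that [ring] and [lra] recognise. *)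
Lemma sum_n_m_extR (u v : nat -> R) n m :
  (forall k, u k = v k) -> sum_n_m u n m = sum_n_m v n m.
Proof. exact (sum_n_m_ext u v n m). Qed.

Lemma sum_n_m_plusR (u v : nat -> R) n m :
  sum_n_m (fun k => u k + v k) n m = sum_n_m u n m + sum_n_m v n m.
Proof. exact (sum_n_m_plus u v n m). Qed.

Lemma sum_n_m_multR c (u : nat -> R) n m :
  sum_n_m (fun k => c * u k) n m = c * sum_n_m u n m.
Proof. exact (sum_n_m_mult_l c u n m). Qed.

Lemma sum_n_m_zeroR n m : sum_n_m (fun _ => 0) n m = 0.
Proof. exact (@sum_n_m_const_zero R_AbelianMonoid n m). Qed.

Lemma sum_n_SmR (u : nat -> R) n m :
  (n <= S m)%nat -> sum_n_m u n (S m) = sum_n_m u n m + u (S m).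
Proof. exact (sum_n_Sm u n m). Qed.

Lemma sum_n_m_emptyR (u : nat -> R) n m : (m < n)%nat -> sum_n_m u n m = 0.
Proof. exact (sum_n_m_zero u n m). Qed.

Lemma sum_n_m_ChaslesR (u : nat -> R) n m k :
  (n <= S m)%nat -> (m <= k)%nat -> sum_n_m u n k = sum_n_m u n m + sum_n_m u (S m) k.
Proof. exact (sum_n_m_Chasles u n m k). Qed.

Lemma sum_n_m_split (u : nat -> R) a p m :
  (a < p)%nat -> (p <= S m)%nat -> sum_n_m u a m = sum_n_m u a (pred p) + sum_n_m u p m.
Proof.
  intros Hap Hpm. destruct (le_lt_dec p m).
  - rewrite (sum_n_m_ChaslesR u a (pred p) m) by lia. now replace (S (pred p)) with p by lia.
  - replace m with (pred p) by lia. rewrite (sum_n_m_emptyR u p (pred p)) by lia. lra.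
Qed.

Lemma sum_n_m_nonneg (u : nat -> R) n m : (forall k, 0 <= u k) -> 0 <= sum_n_m u n m.
Proof. intros H. rewrite <- (sum_n_m_zeroR n m). now apply sum_n_m_le. Qed.

Lemma sum_n_m_zero_loc (u : nat -> R) n m :
  (forall k, (n <= k <= m)%nat -> u k = 0) -> sum_n_m u n m = 0.
Proof. intros H. rewrite (sum_n_m_ext_loc _ (fun _ => 0)) by auto. apply sum_n_m_zeroR. Qed.

Lemma sum_n_m_shift (u : nat -> R) a n m :
  sum_n_m u (a + n) (a + m) = sum_n_m (fun k => u (a + k)%nat) n m.
Proof.
  revert n m; induction a as [|a IH]; intros n m; [reflexivity|].
  replace (S a + n)%nat with (a + S n)%nat by lia.
  replace (S a + m)%nat with (a + S m)%nat by lia.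
  rewrite IH, <- sum_n_m_S. apply sum_n_m_ext; intros k. f_equal; lia.
Qed.

Lemma sum_n_m_as_sum_n (u : nat -> R) a N :
  sum_n_m u a (a + N) = sum_n (fun k => u (a + k)%nat) N.
Proof. unfold sum_n. rewrite <- sum_n_m_shift, Nat.add_0_r. reflexivity. Qed.

Lemma sum_n_m_zero_prefix (u : nat -> R) lo a m :
  (forall k, (lo <= k < a)%nat -> u k = 0) -> (lo <= a <= S m)%nat ->
  sum_n_m u lo m = sum_n_m u a m.
Proof.
  remember (a - lo)%nat as d eqn:Hd. revert lo Hd.
  induction d as [|d IH]; intros lo Hd H0 Hla.
  - now replace a with lo by lia.
  - rewrite sum_Sn_m by lia. rewrite H0 by lia.
    change (0 + sum_n_m u (S lo) m = sum_n_m u a m).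
    rewrite Rplus_0_l. apply IH; [lia| |lia]. intros k Hk; apply H0; lia.
Qed.

Definition seg := (nat * nat)%type.

Definition seg_in (I : seg) (n : nat) : bool := ((fst I <=? n) && (n <=? snd I))%bool.

Lemma seg_in_iff I n : seg_in I n = true <-> (fst I <= n <= snd I)%nat.
Proof. unfold seg_in. rewrite Bool.andb_true_iff, !Nat.leb_le. tauto. Qed.

Lemma seg_in_false I n : seg_in I n = false <-> ~ (fst I <= n <= snd I)%nat.
Proof. rewrite <- seg_in_iff. destruct (seg_in I n); intuition congruence. Qed.

Lemma sum_n_m_indicator (w : nat -> R) lo hi a b :
  (lo <= a)%nat -> (a <= b)%nat -> (b <= hi)%nat ->
  sum_n_m (fun n => if seg_in (a, b) n then w n else 0) lo hi = sum_n_m w a b.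
Proof.
  intros Hla Hab Hbh.
  rewrite (sum_n_m_ChaslesR _ lo b hi) by lia.
  assert (Hout : forall k, ~ (a <= k <= b)%nat -> (if seg_in (a, b) k then w k else 0) = 0)
    by (intros k Hk; now rewrite (proj2 (seg_in_false (a, b) k))).
  rewrite (sum_n_m_zero_loc _ (S b)) by (intros k Hk; apply Hout; lia).
  rewrite (sum_n_m_zero_prefix _ lo a b), Rplus_0_r; [|intros k Hk; apply Hout; lia|lia].
  apply sum_n_m_ext_loc. intros k Hk.
  now rewrite (proj2 (seg_in_iff (a, b) k)) by (simpl; lia).
Qed.

Lemma sum_n_m_single (f : nat -> R) i lo hi :
  (forall j, j <> i -> f j = 0) -> (lo <= i <= hi)%nat -> sum_n_m f lo hi = f i.
Proof.
  intros H Hi. rewrite <- (sum_n_n f i), <- (sum_n_m_indicator f lo hi i i) by lia.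
  apply sum_n_m_ext. intros n. destruct (seg_in (i, i) n) eqn:E; auto.
  apply seg_in_false in E. apply H. simpl in E. lia.
Qed.

Lemma sum_n_m_term_le (f : nat -> R) i lo hi :
  (forall n, 0 <= f n) -> (lo <= i <= hi)%nat -> f i <= sum_n_m f lo hi.
Proof.
  intros H Hi. rewrite <- (sum_n_n f i), <- (sum_n_m_indicator f lo hi i i) by lia.
  apply sum_n_m_le. intros n. destruct (seg_in (i, i) n); [lra|apply H].
Qed.

Lemma sum_n_m_delta (v : R) c a b : (a <= b)%nat ->
  sum_n_m (fun n => if Nat.eqb n c then v else 0) a b = if seg_in (a, b) c then v else 0.
Proof.
  intros Hab. destruct (seg_in (a, b) c) eqn:E.
  - apply seg_in_iff in E. simpl in E.
    rewrite (sum_n_m_single _ c); [now rewrite Nat.eqb_refl| |lia].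
    intros j Hj. now rewrite (proj2 (Nat.eqb_neq j c)).
  - apply seg_in_false in E. apply sum_n_m_zero_loc. intros k Hk.
    destruct (Nat.eqb_spec k c); [simpl in E; lia|reflexivity].
Qed.

Lemma sum_n_mono (u : nat -> R) N k : (forall n, 0 <= u n) -> sum_n u N <= sum_n u (N + k).
Proof.
  intros H. induction k as [|k IH]; [rewrite Nat.add_0_r; lra|].
  rewrite Nat.add_succ_r, sum_Sn. pose proof (H (S (N + k))).
  change (sum_n u N <= sum_n u (N + k) + u (S (N + k))). lra.
Qed.

Lemma ex_series_lim (u : nat -> R) : ex_series u -> is_lim_seq (sum_n u) (Series u).
Proof. intros [l Hl]. now rewrite (is_series_unique _ _ Hl). Qed.

Lemma sum_n_le_Series (u : nat -> R) N :
  (forall n, 0 <= u n) -> ex_series u -> sum_n u N <= Series u.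
Proof.
  intros H He. pose proof (proj1 (is_lim_seq_incr_n _ N _) (ex_series_lim u He)) as Hl.
  refine (is_lim_seq_le (fun _ => sum_n u N) _ _ _ _ (is_lim_seq_const _) Hl).
  intros n. rewrite Nat.add_comm. now apply sum_n_mono.
Qed.

Lemma ex_series_nonneg_bounded (u : nat -> R) M :
  (forall n, 0 <= u n) -> (forall N, sum_n u N <= M) -> ex_series u.
Proof.
  intros H0 HM. destruct (ex_finite_lim_seq_incr (sum_n u) M) as [l Hl]; auto.
  - intros n. rewrite sum_Sn. pose proof (H0 (S n)). change (sum_n u n <= sum_n u n + u (S n)). lra.
  - now exists l.
Qed.

Definition lsum {A} (f : A -> R) (l : list A) : R := fold_right (fun a s => f a + s) 0 l.

Lemma lsum_cons {A} (f : A -> R) a l : lsum f (a :: l) = f a + lsum f l.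
Proof. reflexivity. Qed.

Lemma lsum_app {A} (f : A -> R) l1 l2 : lsum f (l1 ++ l2) = lsum f l1 + lsum f l2.
Proof. induction l1 as [|a l1 IH]; simpl; [lra|]. rewrite IH; lra. Qed.

Lemma lsum_ext {A} (f g : A -> R) l : (forall a, In a l -> f a = g a) -> lsum f l = lsum g l.
Proof. induction l as [|a l IH]; simpl; intros H; auto. rewrite H, IH; auto. Qed.

Lemma lsum_le {A} (f g : A -> R) l : (forall a, In a l -> f a <= g a) -> lsum f l <= lsum g l.
Proof.
  induction l as [|a l IH]; simpl; intros H; [lra|].
  pose proof (H a (or_introl eq_refl)). pose proof (IH (fun b hb => H b (or_intror hb))). lra.
Qed.

Lemma lsum_nonneg {A} (f : A -> R) l : (forall a, In a l -> 0 <= f a) -> 0 <= lsum f l.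
Proof.
  intros H. apply Rle_trans with (lsum (fun _ => 0) l); [|now apply lsum_le].
  clear H; induction l; simpl; lra.
Qed.

Lemma lsum_zero {A} (f : A -> R) l : (forall a, In a l -> f a = 0) -> lsum f l = 0.
Proof. intros H. rewrite (lsum_ext _ (fun _ => 0) l H). clear H; induction l; simpl; lra. Qed.

Lemma lsum_perm {A} (f : A -> R) l l' : Permutation l l' -> lsum f l = lsum f l'.
Proof. induction 1; simpl; lra. Qed.

Lemma lsum_plus {A} (f g : A -> R) l : lsum (fun a => f a + g a) l = lsum f l + lsum g l.
Proof. induction l; simpl; lra. Qed.

Lemma lsum_mult {A} c (f : A -> R) l : lsum (fun a => c * f a) l = c * lsum f l.
Proof. induction l as [|a l IH]; simpl; [lra|]. rewrite IH. lra. Qed.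

Lemma lsum_map {A B} (f : B -> R) (g : A -> B) l : lsum f (map g l) = lsum (fun a => f (g a)) l.
Proof. induction l as [|a l IH]; simpl; auto. now rewrite IH. Qed.

Lemma lsum_filter {A} (f : A -> R) (P : A -> bool) l :
  lsum f (filter P l) = lsum (fun a => if P a then f a else 0) l.
Proof. induction l as [|a l IH]; simpl; auto. destruct (P a); simpl; rewrite IH; lra. Qed.

Lemma lsum_seq (f : nat -> R) a n : lsum f (seq a (S n)) = sum_n_m f a (a + n).
Proof.
  induction n as [|n IH].
  - simpl. rewrite Nat.add_0_r, sum_n_n. lra.
  - rewrite seq_S, lsum_app, IH. simpl. rewrite Nat.add_succ_r, sum_n_SmR by lia. lra.
Qed.

Lemma lsum_sum_n_m {A} (f : A -> nat -> R) l lo hi :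
  lsum (fun I => sum_n_m (f I) lo hi) l = sum_n_m (fun n => lsum (fun I => f I n) l) lo hi.
Proof.
  induction l as [|a l IH]; simpl; [symmetry; apply sum_n_m_zeroR|].
  rewrite IH. symmetry. apply sum_n_m_plusR.
Qed.

Lemma sumsq_lsum {A} (g : A -> R) l : sumsq (map g l) = lsum (fun a => g a ^ 2) l.
Proof. induction l as [|a l IH]; simpl; auto. now rewrite IH. Qed.

Lemma sumsq_app l1 l2 : sumsq (l1 ++ l2) = sumsq l1 + sumsq l2.
Proof. induction l1 as [|a l1 IH]; simpl; [lra|]. rewrite IH; lra. Qed.

Lemma ForallOrdPairs_map {A B} (R1 : A -> A -> Prop) (R2 : B -> B -> Prop) (f : A -> B)
  (P : A -> Prop) l :
  List.Forall P l -> ForallOrdPairs R1 l ->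
  (forall x y, P x -> P y -> R1 x y -> R2 (f x) (f y)) -> ForallOrdPairs R2 (map f l).
Proof.
  intros HP H Hf. induction H as [|a l Ha H IH]; simpl; constructor.
  - inversion HP; subst. rewrite Forall_forall in *. intros b Hb.
    apply in_map_iff in Hb. destruct Hb as [c [<- Hc]]. apply Hf; auto.
  - inversion HP; auto.
Qed.

Lemma ForallOrdPairs_app {A} (R1 : A -> A -> Prop) l1 l2 :
  ForallOrdPairs R1 l1 -> ForallOrdPairs R1 l2 -> (forall x y, In x l1 -> In y l2 -> R1 x y) ->
  ForallOrdPairs R1 (l1 ++ l2).
Proof.
  intros H1 H2 H. induction H1 as [|a l1 Ha H1 IH]; simpl; auto. constructor.
  - apply Forall_app; split; auto. rewrite Forall_forall; intros; apply H; simpl; auto.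
  - apply IH. intros; apply H; simpl; auto.
Qed.

Lemma ForallOrdPairs_app_inv {A} (R1 : A -> A -> Prop) l1 l2 :
  ForallOrdPairs R1 (l1 ++ l2) ->
  ForallOrdPairs R1 l1 /\ ForallOrdPairs R1 l2 /\ (forall x y, In x l1 -> In y l2 -> R1 x y).
Proof.
  induction l1 as [|a l1 IH]; simpl; intros H.
  - repeat split; [constructor|exact H|intros; contradiction].
  - inversion H as [|? ? Ha Hl]; subst. apply Forall_app in Ha as [Ha1 Ha2].
    destruct (IH Hl) as [? [? ?]]. repeat split; auto.
    + now constructor.
    + intros x y [<-|Hx] Hy; auto. rewrite Forall_forall in Ha2; auto.
Qed.

Lemma ForallOrdPairs_perm {A} (R1 : A -> A -> Prop) l l' :
  (forall x y, R1 x y -> R1 y x) -> Permutation l l' -> ForallOrdPairs R1 l -> ForallOrdPairs R1 l'.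
Proof.
  intros Hs Hp. induction Hp; intros HF; auto.
  - inversion HF; subst. constructor; auto. eapply Permutation_Forall; eauto.
  - inversion HF as [|? ? H1 H2]; subst. inversion H1; subst. inversion H2; subst.
    constructor; constructor; auto.
Qed.

Lemma ForallOrdPairs_filter {A} (R1 : A -> A -> Prop) P l :
  ForallOrdPairs R1 l -> ForallOrdPairs R1 (filter P l).
Proof.
  induction 1 as [|a l Ha H IH]; simpl; [constructor|]. destruct (P a); auto. constructor; auto.
  rewrite Forall_forall in *. intros y Hy; apply filter_In in Hy; apply Ha; tauto.
Qed.

Lemma ForallOrdPairs_In {A} (R1 : A -> A -> Prop) l a b :
  ForallOrdPairs R1 l -> In a l -> In b l -> a <> b -> R1 a b \/ R1 b a.
Proof.
  induction 1 as [|c l Hc H IH]; intros Ha Hb Hab; [contradiction|].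
  rewrite Forall_forall in Hc.
  destruct Ha as [<-|Ha]; destruct Hb as [<-|Hb]; auto; congruence.
Qed.

Lemma ForallOrdPairs_seq a n : ForallOrdPairs lt (seq a n).
Proof.
  revert a; induction n as [|n IH]; intros a; simpl; constructor; auto.
  rewrite Forall_forall; intros j Hj; apply in_seq in Hj; lia.
Qed.

Lemma Permutation_filter_split {A} (f : A -> bool) l :
  Permutation l (filter f l ++ filter (fun a => negb (f a)) l).
Proof.
  induction l as [|a l IH]; simpl; auto. destruct (f a); simpl.
  - now constructor.
  - eapply Permutation_trans; [apply perm_skip; exact IH|]. apply Permutation_middle.
Qed.

Definition seg_valid (I : seg) : Prop := (fst I <= snd I)%nat.
Definition seg_disj (I J : seg) : Prop := (snd I < fst J)%nat \/ (snd J < fst I)%nat.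
Definition seg_family (l : list seg) : Prop := List.Forall seg_valid l /\ ForallOrdPairs seg_disj l.
Definition seg_sum (z : nat -> R) (I : seg) : R := sum_n_m z (fst I) (snd I).
Definition sqsum (z : nat -> R) (l : list seg) : R := lsum (fun I => seg_sum z I ^ 2) l.

(* [Jsq_le z M] says [||z||_J^2 <= M]; by [sumsq_le_of_Jsq_le] it is enough
   to test finite families of finite intervals. *)
Definition Jsq_le (z : nat -> R) (M : R) : Prop := forall l, seg_family l -> sqsum z l <= M.

Lemma seg_disj_sym I J : seg_disj I J -> seg_disj J I.
Proof. unfold seg_disj; tauto. Qed.

Lemma sqsum_nonneg z l : 0 <= sqsum z l.
Proof. apply lsum_nonneg; intros; nra. Qed.

Lemma sqsum_app z l1 l2 : sqsum z (l1 ++ l2) = sqsum z l1 + sqsum z l2.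
Proof. apply lsum_app. Qed.

Lemma sqsum_perm z l l' : Permutation l l' -> sqsum z l = sqsum z l'.
Proof. apply lsum_perm. Qed.

Lemma seg_family_perm l l' : Permutation l l' -> seg_family l -> seg_family l'.
Proof.
  intros Hp [Hv Hd]. split.
  - eapply Permutation_Forall; eauto.
  - eapply ForallOrdPairs_perm; eauto. apply seg_disj_sym.
Qed.

Lemma seg_family_app l1 l2 :
  seg_family l1 -> seg_family l2 -> (forall I J, In I l1 -> In J l2 -> seg_disj I J) ->
  seg_family (l1 ++ l2).
Proof. intros [H1 H2] [H3 H4] H. split; [apply Forall_app|apply ForallOrdPairs_app]; auto. Qed.

Lemma seg_family_app_inv l1 l2 :
  seg_family (l1 ++ l2) ->
  seg_family l1 /\ seg_family l2 /\ (forall I J, In I l1 -> In J l2 -> seg_disj I J).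
Proof.
  intros [Hv Hd]. apply Forall_app in Hv. apply ForallOrdPairs_app_inv in Hd.
  unfold seg_family; tauto.
Qed.

Lemma seg_family_singletons N : seg_family (map (fun n => (n, n)) (seq 0 (S N))).
Proof.
  split.
  - rewrite Forall_forall. intros I HI. apply in_map_iff in HI.
    destruct HI as [n [<- _]]. unfold seg_valid; simpl; lia.
  - apply (ForallOrdPairs_map lt seg_disj _ (fun _ => True)).
    + rewrite Forall_forall; auto.
    + apply ForallOrdPairs_seq.
    + intros i j _ _ H. left. simpl. lia.
Qed.

Lemma sqsum_singletons z N :
  sqsum z (map (fun n => (n, n)) (seq 0 (S N))) = sum_n (fun n => z n ^ 2) N.
Proof.
  unfold sqsum, sum_n. rewrite lsum_map. unfold seg_sum; cbn [fst snd].
  rewrite (lsum_ext _ (fun n => z n ^ 2)) by (intros; now rewrite sum_n_n).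
  apply lsum_seq.
Qed.

Lemma Jsq_le_partial_sq z M : Jsq_le z M -> forall N, sum_n (fun n => z n ^ 2) N <= M.
Proof. intros HB N. rewrite <- sqsum_singletons. apply HB, seg_family_singletons. Qed.

Lemma Jsq_le_seg_sum z M I : Jsq_le z M -> seg_valid I -> seg_sum z I ^ 2 <= M.
Proof.
  intros HB Hv. assert (H : seg_family (I :: nil)) by (split; repeat constructor; auto).
  apply HB in H. unfold sqsum, lsum in H; simpl in H. lra.
Qed.

Definition seg_interval (I : seg) : interval := (fst I, Some (snd I)).

Lemma Jvalues_seg_family z l : seg_family l -> Jvalues z (sqrt (sqsum z l)).
Proof.
  intros [Hv Hd]. exists (map seg_interval l). split; [|split].
  - rewrite Forall_forall in *. intros I HI. apply in_map_iff in HI.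
    destruct HI as [J [<- HJ]]. exact (Hv J HJ).
  - apply (ForallOrdPairs_map seg_disj disjoint_intervals seg_interval seg_valid); auto.
    intros [a b] [c d] H1 H2 H3 n [Hn1 Hn2].
    unfold in_interval, seg_valid, seg_disj in *; simpl in *.
    apply andb_prop in Hn1 as [Ha Hb], Hn2 as [Hc Hd'].
    apply Nat.leb_le in Ha, Hb, Hc, Hd'. lia.
  - now rewrite map_map, sumsq_lsum.
Qed.

Lemma Jvalues_le_of_Jnorm_le z r v : Rbar_le (Jnorm z) (Finite r) -> Jvalues z v -> v <= r.
Proof.
  intros H Hv. destruct (Lub_Rbar_correct (Jvalues z)) as [Hub _].
  exact (Rbar_le_trans (Finite v) _ (Finite r) (Hub v Hv) H).
Qed.

Lemma le_sq_of_sqrt_le v r : 0 <= v -> 0 <= r -> sqrt v <= r -> v <= r ^ 2.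
Proof.
  intros Hv Hr H. rewrite <- (sqrt_sqrt v Hv). simpl. rewrite Rmult_1_r.
  apply Rmult_le_compat; auto; apply sqrt_pos.
Qed.

Lemma Jsq_le_of_Jnorm_le z r : 0 <= r -> Rbar_le (Jnorm z) (Finite r) -> Jsq_le z (r ^ 2).
Proof.
  intros Hr H l Hl. apply le_sq_of_sqrt_le; auto using sqsum_nonneg.
  apply (Jvalues_le_of_Jnorm_le z r); auto. now apply Jvalues_seg_family.
Qed.

Lemma Jsq_le_of_in_BJ z : in_BJ z -> Jsq_le z 1.
Proof. intros H. replace 1 with (1 ^ 2) by ring. apply Jsq_le_of_Jnorm_le; [lra|exact H]. Qed.

Lemma Jsq_le_no_large_blocks z M (eps : R) : Jsq_le z M -> 0 < eps ->
  ~ (forall N, exists n m, (N <= n <= m)%nat /\ eps <= Rabs (sum_n_m z n m)).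
Proof.
  intros HB He Hlarge.
  assert (Hmany : forall K N, exists l, seg_family l /\ (forall I, In I l -> (N <= fst I)%nat) /\
                                   INR K * eps ^ 2 <= sqsum z l).
  { induction K as [|K IH]; intros N.
    - exists nil. split; [split; constructor|]. split; [intros I []|]. unfold sqsum; simpl; lra.
    - destruct (Hlarge N) as [n [m [Hnm Hbig]]].
      destruct (IH (S m)) as [l [[Hv Hd] [Hafter Hval]]].
      exists ((n, m) :: l). split; [split|split].
      + constructor; auto. unfold seg_valid; simpl; lia.
      + constructor; auto. rewrite Forall_forall. intros J HJ. left. simpl. apply Hafter in HJ. lia.
      + intros I [<-|HI]; simpl; [lia|]. apply Hafter in HI; lia.
      + unfold sqsum in *. rewrite S_INR, lsum_cons. unfold seg_sum at 1; cbn [fst snd].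
        assert (eps ^ 2 <= sum_n_m z n m ^ 2) by (rewrite <- (pow2_abs (sum_n_m z n m)); nra).
        lra. }
  destruct (INR_unbounded (M / eps ^ 2)) as [K HK].
  destruct (Hmany K 0%nat) as [l [Hl [_ Hv]]]. pose proof (HB l Hl).
  assert (M < INR K * eps ^ 2).
  { apply Rmult_lt_reg_r with (/ eps ^ 2); [apply Rinv_0_lt_compat; nra|].
    rewrite Rmult_assoc, Rinv_r, Rmult_1_r by nra. exact HK. }
  lra.
Qed.

Lemma Jsq_le_ex_series z M : Jsq_le z M -> forall a, ex_series (fun k => z (a + k)%nat).
Proof.
  intros HB a. apply (@ex_series_Cauchy R_AbsRing R_CompleteNormedModule). intros eps.
  apply NNPP. intros Hnot. apply (Jsq_le_no_large_blocks z M eps HB (cond_pos eps)).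
  intros N. apply NNPP; intros Hsmall. apply Hnot. exists N. intros n m Hn Hm.
  apply Rnot_le_lt. intros Hbig.
  destruct (le_lt_dec n m) as [Hnm|Hmn].
  - apply Hsmall. exists (a + n)%nat, (a + m)%nat. split; [lia|].
    now rewrite sum_n_m_shift.
  - rewrite sum_n_m_zero in Hbig by exact Hmn. pose proof (cond_pos eps).
    change (eps <= Rabs 0) in Hbig. rewrite Rabs_R0 in Hbig. lra.
Qed.

Definition seg_trunc (N : nat) (I : interval) : seg :=
  (fst I, match snd I with Some b => b | None => (fst I + N)%nat end).

Lemma seg_family_trunc N l :
  List.Forall valid_interval l -> ForallOrdPairs disjoint_intervals l ->
  seg_family (map (seg_trunc N) l).
Proof.
  intros Hv Hd. split.
  - rewrite Forall_forall in *. intros J HJ. apply in_map_iff in HJ. destruct HJ as [I [<- HI]].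
    apply Hv in HI. unfold seg_valid, seg_trunc, valid_interval in *.
    destruct I as [a [b|]]; simpl in *; lia.
  - apply (ForallOrdPairs_map disjoint_intervals seg_disj (seg_trunc N) valid_interval); auto.
    intros [a b'] [c d'] H1 H2 H3.
    unfold seg_disj, seg_trunc, disjoint_intervals, valid_interval in *.
    simpl in *. apply NNPP; intros H4. apply (H3 (Nat.max a c)). unfold in_interval; simpl.
    destruct b' as [b|]; destruct d' as [d|]; simpl in *.
    all: split; apply andb_true_intro; split; try reflexivity; apply Nat.leb_le; lia.
Qed.

Lemma is_lim_seq_lsum_sq {A} (g : nat -> A -> R) (h : A -> R) l :
  (forall a, In a l -> is_lim_seq (fun N => g N a) (h a)) ->
  is_lim_seq (fun N => lsum (fun a => g N a ^ 2) l) (lsum (fun a => h a ^ 2) l).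
Proof.
  induction l as [|a l IH]; simpl; intros H; [apply is_lim_seq_const|].
  apply is_lim_seq_plus'; auto.
  apply is_lim_seq_mult'; [auto|]. apply is_lim_seq_mult'; [auto|apply is_lim_seq_const].
Qed.

(* An infinite interval [a, oo) is the limit of its truncations [a, a + N]. *)
Lemma sumsq_le_of_Jsq_le z M : Jsq_le z M ->
  forall l, List.Forall valid_interval l -> ForallOrdPairs disjoint_intervals l ->
  sumsq (map (isum z) l) <= M.
Proof.
  intros HB l Hv Hd.
  assert (Hlim : is_lim_seq (fun N => sqsum z (map (seg_trunc N) l)) (sumsq (map (isum z) l))).
  { rewrite sumsq_lsum. unfold sqsum.
    eapply is_lim_seq_ext; [intros N; symmetry; apply (lsum_map _ (seg_trunc N))|].
    apply is_lim_seq_lsum_sq. intros [a [b|]] _; unfold seg_trunc, seg_sum, isum; simpl.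
    - apply is_lim_seq_const.
    - eapply is_lim_seq_ext; [intros N; symmetry; apply sum_n_m_as_sum_n|].
      apply ex_series_lim. eapply Jsq_le_ex_series; eauto. }
  refine (is_lim_seq_le _ _ _ _ _ Hlim (is_lim_seq_const M)).
  intros N. apply HB, seg_family_trunc; auto.
Qed.

Lemma in_BJ_of_Jsq_le z : Jsq_le z 1 -> in_BJ z.
Proof.
  intros HB. unfold in_BJ, Jnorm. destruct (Lub_Rbar_correct (Jvalues z)) as [_ Hl].
  apply Hl. intros v [l [Hv [Hd ->]]]. simpl. rewrite <- sqrt_1. apply sqrt_le_1_alt.
  now apply (sumsq_le_of_Jsq_le z 1).
Qed.

(** * Sequences whose block sums are dominated in l2 *)

Definition block_sq_le (z : nat -> R) : Prop :=
  forall a b, (a <= b)%nat -> (sum_n_m z a b) ^ 2 <= sum_n_m (fun n => z n ^ 2) a b.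

Lemma lsum_indicator_le (w : R) n l : 0 <= w -> ForallOrdPairs seg_disj l ->
  lsum (fun I => if seg_in I n then w else 0) l <= w.
Proof.
  intros Hw H. induction H as [|I l HI H IH]; simpl; [lra|].
  destruct (seg_in I n) eqn:E; [|lra].
  rewrite lsum_zero; [lra|]. intros J HJ. rewrite Forall_forall in HI.
  specialize (HI J HJ). destruct (seg_in J n) eqn:E2; auto.
  apply seg_in_iff in E, E2. unfold seg_disj in HI. lia.
Qed.

Lemma lsum_seg_sum_le (w : nat -> R) lo hi l : (forall n, 0 <= w n) -> seg_family l ->
  (forall I, In I l -> (lo <= fst I)%nat /\ (snd I <= hi)%nat) ->
  lsum (seg_sum w) l <= sum_n_m w lo hi.
Proof.
  intros Hw [Hv Hd] Hin.
  rewrite (lsum_ext _ (fun I => sum_n_m (fun n => if seg_in I n then w n else 0) lo hi)).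
  - rewrite lsum_sum_n_m. apply sum_n_m_le. intros n. now apply lsum_indicator_le.
  - intros [a b] HI. rewrite Forall_forall in Hv. specialize (Hv _ HI). specialize (Hin _ HI).
    unfold seg_valid in *; simpl in *. symmetry. apply sum_n_m_indicator; lia.
Qed.

Lemma sqsum_le_of_block_sq_le z l N : block_sq_le z -> seg_family l ->
  (forall I, In I l -> (snd I <= N)%nat) -> sqsum z l <= sum_n (fun n => z n ^ 2) N.
Proof.
  intros Hz Hl HN. apply Rle_trans with (lsum (seg_sum (fun n => z n ^ 2)) l).
  - apply lsum_le. intros I HI. apply Hz. destruct Hl as [Hv _].
    rewrite Forall_forall in Hv. exact (Hv I HI).
  - apply lsum_seg_sum_le; auto; [intros; nra|]. intros I HI. split; [lia|auto].
Qed.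

Fixpoint max_snd (l : list seg) : nat :=
  match l with nil => 0%nat | J :: l' => Nat.max (snd J) (max_snd l') end.

Lemma max_snd_spec l I : In I l -> (snd I <= max_snd l)%nat.
Proof.
  induction l as [|J l IH]; simpl; intros H; [contradiction|].
  destruct H as [<-|H]; [lia|]. apply IH in H; lia.
Qed.

Lemma Jnorm_block_sq_le z : block_sq_le z -> ex_series (fun n => z n ^ 2) ->
  Jnorm z = Finite (sqrt (Series (fun n => z n ^ 2))).
Proof.
  intros Hz He. unfold Jnorm. apply is_lub_Rbar_unique. split.
  - intros v [l [Hv [Hd ->]]]. simpl. apply sqrt_le_1_alt.
    apply (sumsq_le_of_Jsq_le z); auto. intros l' Hl'.
    eapply Rle_trans; [apply (sqsum_le_of_block_sq_le z l' (max_snd l')); auto|].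
    + apply max_snd_spec.
    + apply sum_n_le_Series; auto. intros; nra.
  - intros b Hb.
    assert (Hs : forall N, Rbar_le (Finite (sqrt (sum_n (fun n => z n ^ 2) N))) b).
    { intros N. apply Hb. rewrite <- sqsum_singletons.
      apply Jvalues_seg_family, seg_family_singletons. }
    destruct b as [r| |]; simpl; auto; [|apply (Hs 0%nat)].
    assert (Hr : 0 <= r).
    { assert (H0 : sqrt (sum_n (fun n => z n ^ 2) 0) <= r) by exact (Hs 0%nat).
      pose proof (sqrt_pos (sum_n (fun n => z n ^ 2) 0)). lra. }
    assert (Hp : forall N, sum_n (fun n => z n ^ 2) N <= r ^ 2).
    { intros N. apply le_sq_of_sqrt_le; auto; [|exact (Hs N)].
      apply sum_n_m_nonneg. intros; nra. }
    rewrite <- (sqrt_pow2 r Hr). apply sqrt_le_1_alt.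
    exact (is_lim_seq_le _ (fun _ => r ^ 2) _ _ Hp (ex_series_lim _ He) (is_lim_seq_const _)).
Qed.

(** * Extreme points have l2-dominated block sums *)

Definition list_of_option {A} (o : option A) : list A :=
  match o with Some a => a :: nil | None => nil end.

(* The extracted member is unique because every member satisfying [P]
   contains [n]. *)
Lemma seg_family_extract (P : seg -> Prop) n l : seg_family l ->
  (forall J, P J -> (fst J <= n <= snd J)%nat) ->
  exists o rest, Permutation l (list_of_option o ++ rest) /\
    (forall L, o = Some L -> P L) /\ (forall J, In J rest -> ~ P J).
Proof.
  intros Hl Hn. destruct (classic (exists J, In J l /\ P J)) as [[J [HJ HP]]|Hnone].
  - apply in_split in HJ as [l1 [l2 ->]].
    exists (Some J), (l1 ++ l2). split; [simpl; symmetry; apply Permutation_middle|split].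
    + now intros L [= <-].
    + intros K HK HPK.
      assert (Hf : seg_family (J :: l1 ++ l2))
        by (eapply seg_family_perm; [symmetry; apply Permutation_middle|exact Hl]).
      destruct Hf as [_ Hd]. inversion Hd as [|? ? Hall _]; subst. rewrite Forall_forall in Hall.
      specialize (Hall K HK). apply Hn in HP. apply Hn in HPK. unfold seg_disj in Hall. lia.
  - exists None, l. split; [apply Permutation_refl|split]; [discriminate|].
    intros J HJ HP. apply Hnone. eauto.
Qed.

Definition crosses_left p q (L : seg) : Prop := (fst L < p <= snd L)%nat /\ (snd L < q)%nat.
Definition crosses_right p q (R : seg) : Prop := (p < fst R)%nat /\ (fst R <= q < snd R)%nat.
Definition strictly_inside p q (J : seg) : Prop :=
  (p <= fst J)%nat /\ (snd J <= q)%nat /\ (p < fst J \/ snd J < q)%nat.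
Definition span_lo (oL : option seg) p := match oL with Some L => fst L | None => p end.
Definition span_hi (oR : option seg) q := match oR with Some R => snd R | None => q end.

Lemma crossing_members p q l : seg_family l ->
  (forall I, In I l -> ~ (fst I <= p /\ q <= snd I)%nat) ->
  exists oL oR rest,
    Permutation l (list_of_option oL ++ list_of_option oR ++ rest) /\
    (forall L, oL = Some L -> crosses_left p q L) /\
    (forall R, oR = Some R -> crosses_right p q R) /\
    (forall J, In J rest -> ~ (fst J < p <= snd J)%nat /\ ~ (fst J <= q < snd J)%nat).
Proof.
  intros Hl Hnc.
  destruct (seg_family_extract (fun J => (fst J < p <= snd J)%nat) p l Hl) as
    [oL [rest [Hp1 [HoL HnL]]]]; [simpl; lia|].
  assert (Hrest : seg_family rest)
    by (apply (seg_family_app_inv (list_of_option oL)), (seg_family_perm l); auto).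
  destruct (seg_family_extract (fun J => (fst J <= q < snd J)%nat) q rest Hrest) as
    [oR [rest' [Hp2 [HoR HnR]]]]; [simpl; lia|].
  assert (Hperm : Permutation l (list_of_option oL ++ list_of_option oR ++ rest'))
    by (eapply Permutation_trans; [exact Hp1|]; now apply Permutation_app_head).
  assert (Hin : forall J, In J (list_of_option oL ++ list_of_option oR ++ rest') -> In J l)
    by (intros J HJ; now apply (Permutation_in _ (Permutation_sym Hperm))).
  exists oL, oR, rest'. split; [exact Hperm|]. split; [|split].
  - intros L HL. pose proof (HoL L HL). subst oL.
    pose proof (Hnc L (Hin L (or_introl eq_refl))). unfold crosses_left. simpl in *. lia.
  - intros R HR. pose proof (HoR R HR). subst oR.
    assert (HR' : In R l) by (apply Hin, in_or_app; right; simpl; auto).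
    pose proof (Hnc R HR'). unfold crosses_right. simpl in *. lia.
  - intros J HJ. split; [|now apply HnR]. apply HnL.
    apply (Permutation_in _ (Permutation_sym Hp2)), in_or_app. now right.
Qed.

Lemma outside_span p q oL oR J : seg_valid J -> (snd J < p \/ q < fst J)%nat ->
  (forall L, oL = Some L -> crosses_left p q L /\ seg_disj L J) ->
  (forall R, oR = Some R -> crosses_right p q R /\ seg_disj R J) ->
  (snd J < span_lo oL p)%nat \/ (span_hi oR q < fst J)%nat.
Proof.
  unfold seg_valid, crosses_left, crosses_right, seg_disj. intros Hv Hout HL HR.
  destruct oL as [L|], oR as [R|]; simpl;
    try destruct (HL L eq_refl); try destruct (HR R eq_refl); lia.
Qed.

Lemma noncovering_decomposition p q l : seg_family l ->
  (forall I, In I l -> ~ (fst I <= p /\ q <= snd I)%nat) ->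
  exists oL oR inn out,
    Permutation l (list_of_option oL ++ list_of_option oR ++ inn ++ out) /\
    (forall L, oL = Some L -> crosses_left p q L) /\
    (forall R, oR = Some R -> crosses_right p q R) /\
    (forall J, In J inn -> strictly_inside p q J) /\
    (forall J, In J out -> (snd J < span_lo oL p)%nat \/ (span_hi oR q < fst J)%nat).
Proof.
  intros Hl Hnc.
  destruct (crossing_members p q l Hl Hnc) as [oL [oR [rest [Hp [HoL [HoR Hrest]]]]]].
  set (insb := fun J : seg => ((p <=? fst J) && (snd J <=? q))%bool).
  exists oL, oR, (filter insb rest), (filter (fun J => negb (insb J)) rest).
  assert (Hperm : Permutation l (list_of_option oL ++ list_of_option oR ++ filter insb rest ++
                                 filter (fun J => negb (insb J)) rest)).
  { eapply Permutation_trans; [exact Hp|]. do 2 apply Permutation_app_head.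
    apply Permutation_filter_split. }
  assert (Hin : forall J, In J rest -> In J l).
  { intros J HJ. apply (Permutation_in _ (Permutation_sym Hp)).
    do 2 (apply in_or_app; right). exact HJ. }
  pose proof (seg_family_perm _ _ Hperm Hl) as Hbig.
  apply seg_family_app_inv in Hbig as [_ [Hbig HL]].
  apply seg_family_app_inv in Hbig as [_ [_ HR]].
  split; [exact Hperm|]. do 2 (split; [assumption|]). split.
  - intros J HJ. apply filter_In in HJ as [HJ Hb]. apply andb_prop in Hb as [Hb1 Hb2].
    apply Nat.leb_le in Hb1, Hb2. pose proof (Hnc J (Hin J HJ)).
    unfold strictly_inside. lia.
  - intros J HJ. assert (HJout : In J (filter insb rest ++ filter (fun J => negb (insb J)) rest))
      by (apply in_or_app; now right).
    apply filter_In in HJ as [HJ Hb]. unfold insb in Hb.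
    destruct (Hrest J HJ) as [HnL HnR].
    destruct Hl as [Hv _]. rewrite Forall_forall in Hv. pose proof (Hv J (Hin J HJ)) as HvJ.
    apply outside_span; [exact HvJ| | |].
    + unfold seg_valid in HvJ.
      destruct (Nat.leb_spec p (fst J)), (Nat.leb_spec (snd J) q); simpl in Hb; lia.
    + intros L ->. split; [now apply HoL|]. apply HL; [now left|].
      apply in_or_app. now right.
    + intros R ->. split; [now apply HoR|]. apply HR; [now left|]. exact HJout.
Qed.

(* Merging the outer parts [a], [g] of the members crossing the ends of a
   violating block [p, q] (sum [S], sum of squares [Q]) into it when they have
   the sign of [S] gains at least [S^2 - Q]. *)
Lemma merge_gain (mL mR : bool) a b g r S Q M :
  b * (S - b) >= 0 -> r * (S - r) >= 0 -> b ^ 2 + r ^ 2 + M <= Q -> Q < S ^ 2 ->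
  (if mL then a * S > 0 else a * S <= 0) -> (if mR then g * S > 0 else g * S <= 0) ->
  (a + b) ^ 2 + (g + r) ^ 2 + M + (S ^ 2 - Q) <=
  (if mL then 0 else a ^ 2) + ((if mL then a else 0) + S + (if mR then g else 0)) ^ 2 +
  (if mR then 0 else g ^ 2).
Proof.
  intros Hb Hr HQ HS HL HR. destruct mL, mR.
  - assert (g * (S - r) >= 0) by nra. assert (a * (S - b) >= 0) by nra.
    assert (a * g > 0) by nra. nra.
  - assert (a * (S - b) >= 0) by nra. assert (g * r <= 0) by nra. nra.
  - assert (g * (S - r) >= 0) by nra. assert (a * b <= 0) by nra. nra.
  - assert (a * b <= 0) by (destruct (Rle_dec 0 S); nra). assert (g * r <= 0) by nra. nra.
Qed.

Definition seg_sub (I' I : seg) : Prop := (fst I <= fst I')%nat /\ (snd I' <= snd I)%nat.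

Lemma seg_family_sub l' l :
  Forall2 seg_sub l' l -> List.Forall seg_valid l' -> seg_family l -> seg_family l'.
Proof.
  intros Hs Hv' [_ Hd]. split; [exact Hv'|]. clear Hv'.
  induction Hs as [|I' I l' l HI Hs IH]; constructor.
  - inversion Hd as [|? ? Hall _]; subst. clear IH Hd.
    induction Hs as [|J' J k' k HJ Hs IH']; constructor; inversion Hall; subst; auto.
    unfold seg_disj, seg_sub in *. lia.
  - inversion Hd; auto.
Qed.

Lemma Jsq_le_replace x lin out lnew lo0 hi0 eta : Jsq_le x 1 ->
  seg_family (lin ++ out) -> (forall J, In J out -> (snd J < lo0)%nat \/ (hi0 < fst J)%nat) ->
  seg_family lnew -> (forall I, In I lnew -> (lo0 <= fst I)%nat /\ (snd I <= hi0)%nat) ->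
  sqsum x lin + eta <= sqsum x lnew -> sqsum x (lin ++ out) + eta <= 1.
Proof.
  intros HB Hold Hout Hnew Hbd Hv. apply seg_family_app_inv in Hold as [_ [Ho _]].
  assert (H : seg_family (lnew ++ out)).
  { apply seg_family_app; auto. intros I J HI HJ. apply Hbd in HI. apply Hout in HJ.
    unfold seg_disj. lia. }
  apply HB in H. rewrite sqsum_app in *. lra.
Qed.

Section NoncoveringFamilies.

Variables (x : nat -> R) (p q : nat).
Hypothesis Hpq : (p < q)%nat.

(* For the member [L] crossing [p] and the member [R] crossing [q] (when they
   exist): [alpha] and [beta] are the sums of [x] over [L] left and right of [p];
   [rho] and [gamma] those over [R] left and right of [q]. *)
Definition alpha (oL : option seg) :=
  match oL with Some L => sum_n_m x (fst L) (pred p) | None => 0 end.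
Definition beta (oL : option seg) :=
  match oL with Some L => sum_n_m x p (snd L) | None => 0 end.
Definition rho (oR : option seg) :=
  match oR with Some R => sum_n_m x (fst R) q | None => 0 end.
Definition gamma (oR : option seg) :=
  match oR with Some R => sum_n_m x (S q) (snd R) | None => 0 end.

Definition merged_family (oL oR : option seg) (mL mR : bool) : list seg :=
  (if mL then nil else match oL with Some L => (fst L, pred p) :: nil | None => nil end) ++
  ((if mL then span_lo oL p else p), (if mR then span_hi oR q else q)) ::
  (if mR then nil else match oR with Some R => (S q, snd R) :: nil | None => nil end).

Lemma merged_family_spec oL oR (mL mR : bool) :
  (oL = None -> mL = false) -> (oR = None -> mR = false) ->
  (forall L, oL = Some L -> crosses_left p q L) ->
  (forall R, oR = Some R -> crosses_right p q R) ->
  let l := merged_family oL oR mL mR in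
  seg_family l /\
  (forall I, In I l -> (span_lo oL p <= fst I)%nat /\ (snd I <= span_hi oR q)%nat) /\
  sqsum x l =
  (if mL then 0 else alpha oL ^ 2) +
  ((if mL then alpha oL else 0) + sum_n_m x p q + (if mR then gamma oR else 0)) ^ 2 +
  (if mR then 0 else gamma oR ^ 2).
Proof.
  intros HmL HmR HL HR.
  destruct oL as [L|]; [destruct (HL L eq_refl) as [HL1 HL2]|rewrite (HmL eq_refl)];
  (destruct oR as [R|]; [destruct (HR R eq_refl) as [HR1 HR2]|rewrite (HmR eq_refl)]);
  try destruct mL; try destruct mR;
  unfold merged_family, span_lo, span_hi, alpha, gamma; cbn [app];
  (split; [split; [repeat constructor; unfold seg_valid; simpl; lia
                 |repeat constructor; unfold seg_disj; simpl; lia]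
          |split; [intros I HI; simpl in HI; repeat destruct HI as [<-|HI];
                   simpl; try lia; contradiction|]]);
  unfold sqsum, lsum, fold_right, seg_sum; cbn [fst snd].
  all: try rewrite (sum_n_m_split x (fst L) p (snd R)) by lia.
  all: try rewrite (sum_n_m_split x (fst L) p q) by lia.
  all: try rewrite (sum_n_m_ChaslesR x p q (snd R)) by lia.
  all: simpl; lra.
Qed.

Lemma sqsum_crossing oL oR inn :
  (forall L, oL = Some L -> crosses_left p q L) ->
  (forall R, oR = Some R -> crosses_right p q R) ->
  sqsum x (list_of_option oL ++ list_of_option oR ++ inn) =
  (alpha oL + beta oL) ^ 2 + (gamma oR + rho oR) ^ 2 + sqsum x inn.
Proof.
  intros HL HR. rewrite !sqsum_app.
  destruct oL as [L|]; [destruct (HL L eq_refl)|];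
  (destruct oR as [R|]; [destruct (HR R eq_refl)|]);
  unfold list_of_option, sqsum, lsum, fold_right, seg_sum, alpha, beta, gamma, rho;
  fold (lsum (fun I => seg_sum x I ^ 2) inn);
  try rewrite (sum_n_m_split x (fst L) p (snd L)) by lia;
  try rewrite (sum_n_m_ChaslesR x (fst R) q (snd R)) by lia; simpl; lra.
Qed.

Hypothesis Hviol : sum_n_m (fun n => x n ^ 2) p q < (sum_n_m x p q) ^ 2.
Hypothesis Hmin : forall J, seg_valid J -> strictly_inside p q J ->
  seg_sum x J ^ 2 <= seg_sum (fun n => x n ^ 2) J.

(* Minimality forces every initial part of [p, q] to have the sign of the whole. *)
Lemma initial_part_sign m : (p <= m < q)%nat ->
  sum_n_m x p m * (sum_n_m x p q - sum_n_m x p m) >= 0.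
Proof.
  intros Hm.
  pose proof (Hmin (p, m)) as H1. pose proof (Hmin (S m, q)) as H2.
  unfold seg_valid, strictly_inside, seg_sum in H1, H2; cbn [fst snd] in H1, H2.
  specialize (H1 ltac:(lia) ltac:(lia)). specialize (H2 ltac:(lia) ltac:(lia)).
  pose proof Hviol as Hv.
  rewrite (sum_n_m_ChaslesR x p m q) in Hv |- * by lia.
  rewrite (sum_n_m_ChaslesR (fun n => x n ^ 2) p m q) in Hv by lia. nra.
Qed.

Lemma beta_sign oL : (forall L, oL = Some L -> crosses_left p q L) ->
  beta oL * (sum_n_m x p q - beta oL) >= 0.
Proof.
  intros HL. destruct oL as [L|]; simpl; [|lra]. destruct (HL L eq_refl).
  apply initial_part_sign. lia.
Qed.

Lemma rho_sign oR : (forall R, oR = Some R -> crosses_right p q R) ->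
  rho oR * (sum_n_m x p q - rho oR) >= 0.
Proof.
  intros HR. destruct oR as [R|]; simpl; [|lra]. destruct (HR R eq_refl).
  pose proof (initial_part_sign (pred (fst R)) ltac:(lia)) as Hs.
  rewrite (sum_n_m_split x p (fst R) q) in Hs |- * by lia. nra.
Qed.

Lemma inner_pieces_le oL oR inn :
  seg_family (list_of_option oL ++ list_of_option oR ++ inn) ->
  (forall L, oL = Some L -> crosses_left p q L) ->
  (forall R, oR = Some R -> crosses_right p q R) ->
  (forall J, In J inn -> strictly_inside p q J) ->
  beta oL ^ 2 + rho oR ^ 2 + sqsum x inn <= sum_n_m (fun n => x n ^ 2) p q.
Proof.
  intros Hl HL HR Hinn.
  set (pieces := list_of_option (option_map (fun L => (p, snd L)) oL) ++
                 list_of_option (option_map (fun R => (fst R, q)) oR) ++ inn).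
  assert (Hvalid : forall I, In I (list_of_option oL ++ list_of_option oR ++ inn) -> seg_valid I)
    by (destruct Hl as [Hv _]; now apply Forall_forall).
  assert (Hpc : forall I, In I pieces -> seg_valid I /\ strictly_inside p q I).
  { intros I HI. unfold pieces in HI. apply in_app_or in HI as [HI|HI].
    { destruct oL as [L|]; simpl in HI; [|contradiction]. destruct HI as [<-|[]].
      destruct (HL L eq_refl). unfold seg_valid, strictly_inside; simpl; lia. }
    apply in_app_or in HI as [HI|HI].
    { destruct oR as [R|]; simpl in HI; [|contradiction]. destruct HI as [<-|[]].
      destruct (HR R eq_refl). unfold seg_valid, strictly_inside; simpl; lia. }
    split; auto. apply Hvalid. do 2 (apply in_or_app; right). exact HI. }
  assert (Hpf : seg_family pieces).
  { apply (seg_family_sub _ (list_of_option oL ++ list_of_option oR ++ inn));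
      [|apply Forall_forall; apply Hpc|exact Hl].
    unfold pieces. apply Forall2_app; [|apply Forall2_app].
    - destruct oL as [L|]; simpl; constructor; auto.
      destruct (HL L eq_refl); unfold seg_sub; simpl; lia.
    - destruct oR as [R|]; simpl; constructor; auto.
      destruct (HR R eq_refl); unfold seg_sub; simpl; lia.
    - clear. induction inn; constructor; auto. unfold seg_sub; lia. }
  assert (Hv : sqsum x pieces = beta oL ^ 2 + rho oR ^ 2 + sqsum x inn).
  { unfold pieces. rewrite !sqsum_app.
    destruct oL, oR; unfold beta, rho, sqsum, lsum, fold_right, seg_sum; simpl; lra. }
  rewrite <- Hv. apply Rle_trans with (lsum (seg_sum (fun n => x n ^ 2)) pieces).
  - apply lsum_le. intros I HI. destruct (Hpc I HI). now apply Hmin.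
  - apply lsum_seg_sum_le; auto; [intros; nra|].
    intros I HI. destruct (Hpc I HI) as [_ [? [? _]]]. lia.
Qed.

Hypothesis HB : Jsq_le x 1.

Lemma sqsum_noncovering_le l : seg_family l ->
  (forall I, In I l -> ~ (fst I <= p /\ q <= snd I)%nat) ->
  sqsum x l + ((sum_n_m x p q) ^ 2 - sum_n_m (fun n => x n ^ 2) p q) <= 1.
Proof.
  intros Hl Hnc.
  destruct (noncovering_decomposition p q l Hl Hnc) as
    [oL [oR [inn [out [Hperm [HoL [HoR [Hinn Hout]]]]]]]].
  assert (Hbig := seg_family_perm _ _ Hperm Hl).
  rewrite (sqsum_perm _ _ _ Hperm), !app_assoc. rewrite !app_assoc in Hbig.
  set (S0 := sum_n_m x p q) in *.
  assert (Hmerge : forall (o : option seg) (s : R), (o = None -> s = 0) ->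
            exists m : bool, (o = None -> m = false) /\ (if m then s * S0 > 0 else s * S0 <= 0)).
  { intros o s Hs. destruct (Rlt_dec 0 (s * S0)).
    - exists true. split; [intros Ho; rewrite (Hs Ho) in *; lra|lra].
    - exists false. split; auto; lra. }
  destruct (Hmerge oL (alpha oL)) as [mL [HmL HsL]]; [now intros ->|].
  destruct (Hmerge oR (gamma oR)) as [mR [HmR HsR]]; [now intros ->|].
  destruct (merged_family_spec oL oR mL mR HmL HmR HoL HoR) as [Hnf [Hnb Hnv]].
  apply (Jsq_le_replace x _ out (merged_family oL oR mL mR) (span_lo oL p) (span_hi oR q)); auto.
  rewrite <- !app_assoc. rewrite sqsum_crossing, Hnv by auto.
  rewrite <- !app_assoc in Hbig.
  apply merge_gain; auto using beta_sign, rho_sign.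
  apply inner_pieces_le; auto. rewrite !app_assoc in Hbig.
  apply seg_family_app_inv in Hbig as [Hb _]. now rewrite <- !app_assoc in Hb.
Qed.

End NoncoveringFamilies.

Definition dipole p q (e : R) (n : nat) : R :=
  (if Nat.eqb n p then e else 0) + (if Nat.eqb n q then - e else 0).

Lemma seg_sum_dipole p q e I : seg_valid I ->
  seg_sum (dipole p q e) I = (if seg_in I p then e else 0) + (if seg_in I q then - e else 0).
Proof.
  intros Hv. destruct I as [a b]. unfold seg_sum, dipole, seg_valid in *; simpl in *.
  now rewrite sum_n_m_plusR, !sum_n_m_delta by lia.
Qed.

Lemma sq_shift_le s e : Rabs s <= 1 -> (s + e) ^ 2 <= s ^ 2 + (2 * Rabs e + e ^ 2).
Proof.
  intros Hs. apply Rabs_le_between in Hs.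
  destruct (Rle_dec 0 e); [rewrite Rabs_right by lra|rewrite Rabs_left by lra]; nra.
Qed.

Lemma seg_sum_add_dipole x p q e I :
  seg_sum (fun n => x n + dipole p q e n) I = seg_sum x I + seg_sum (dipole p q e) I.
Proof. apply sum_n_m_plusR. Qed.

(* The covering member sees [e - e], the other members see nothing. *)
Lemma sqsum_add_dipole_covering x p q e l I : (p <= q)%nat -> seg_family l -> In I l ->
  (fst I <= p)%nat -> (q <= snd I)%nat -> sqsum (fun n => x n + dipole p q e n) l = sqsum x l.
Proof.
  intros Hpq [Hv Hd] HI Hp Hq. rewrite Forall_forall in Hv. apply lsum_ext. intros J HJ.
  rewrite seg_sum_add_dipole, seg_sum_dipole by auto.
  destruct (classic (J = I)) as [->|Hne].
  - pose proof (Hv I HI). unfold seg_valid in *.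
    rewrite (proj2 (seg_in_iff I p)), (proj2 (seg_in_iff I q)) by lia. f_equal. lra.
  - destruct (ForallOrdPairs_In _ _ _ _ Hd HI HJ (not_eq_sym Hne)) as [Hdj|Hdj];
    (destruct (seg_in J p) eqn:E1; [apply seg_in_iff in E1; unfold seg_disj in Hdj; lia|]);
    (destruct (seg_in J q) eqn:E2; [apply seg_in_iff in E2; unfold seg_disj in Hdj; lia|]);
    f_equal; lra.
Qed.

(* Only the members containing [p] or [q] move, and there are at most two. *)
Lemma sqsum_add_dipole_le x p q e l : Jsq_le x 1 -> seg_family l ->
  sqsum (fun n => x n + dipole p q e n) l <= sqsum x l + (4 * Rabs e + 2 * e ^ 2).
Proof.
  intros HB Hl. pose proof Hl as [Hv Hd]. rewrite Forall_forall in Hv.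
  set (c := 2 * Rabs e + e ^ 2).
  set (ind := fun n (J : seg) => if seg_in J n then 1 else 0).
  assert (Hle : sqsum (fun n => x n + dipole p q e n) l <=
                sqsum x l + lsum (fun J => c * (ind p J + ind q J)) l).
  { unfold sqsum. rewrite <- lsum_plus. apply lsum_le. intros J HJ.
    rewrite seg_sum_add_dipole, seg_sum_dipole by auto.
    assert (Hs : Rabs (seg_sum x J) <= 1).
    { apply Rabs_le. pose proof (Jsq_le_seg_sum x 1 J HB (Hv J HJ)). nra. }
    pose proof (sq_shift_le _ e Hs). pose proof (sq_shift_le _ (- e) Hs).
    rewrite Rabs_Ropp in *. pose proof (Rabs_pos e).
    unfold ind, c. destruct (seg_in J p), (seg_in J q);
      replace ((- e) ^ 2) with (e ^ 2) in * by ring; nra. }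
  assert (Hcount : lsum (fun J => c * (ind p J + ind q J)) l <= 2 * c).
  { rewrite lsum_mult, lsum_plus.
    pose proof (lsum_indicator_le 1 p l ltac:(lra) Hd).
    pose proof (lsum_indicator_le 1 q l ltac:(lra) Hd).
    assert (0 <= c) by (pose proof (Rabs_pos e); unfold c; nra). unfold ind. nra. }
  unfold c in *. lra.
Qed.

Lemma Jsq_le_add_dipole x p q e eta : (p <= q)%nat -> Jsq_le x 1 ->
  (forall l, seg_family l -> (forall I, In I l -> ~ (fst I <= p /\ q <= snd I)%nat) ->
     sqsum x l + eta <= 1) ->
  4 * Rabs e + 2 * e ^ 2 <= eta ->
  Jsq_le (fun n => x n + dipole p q e n) 1.
Proof.
  intros Hpq HB Hnc He l Hl.
  destruct (classic (exists I, In I l /\ (fst I <= p /\ q <= snd I)%nat))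
    as [[I [HI [Hp Hq]]]|Hnone].
  - rewrite (sqsum_add_dipole_covering x p q e l I) by auto. now apply HB.
  - assert (Hx : sqsum x l + eta <= 1) by (apply Hnc; auto; intros I HI Hc; apply Hnone; eauto).
    pose proof (sqsum_add_dipole_le x p q e l HB Hl). lra.
Qed.

Lemma not_extreme_of_minimal_violation x p q : (p < q)%nat -> Jsq_le x 1 ->
  sum_n_m (fun n => x n ^ 2) p q < (sum_n_m x p q) ^ 2 ->
  (forall J, seg_valid J -> strictly_inside p q J ->
     seg_sum x J ^ 2 <= seg_sum (fun n => x n ^ 2) J) ->
  ~ extreme_BJ x.
Proof.
  intros Hpq HB Hviol Hmin [_ Hext].
  set (eta := (sum_n_m x p q) ^ 2 - sum_n_m (fun n => x n ^ 2) p q).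
  assert (Heta1 : eta <= 1).
  { pose proof (Jsq_le_seg_sum x 1 (p, q) HB ltac:(unfold seg_valid; simpl; lia)).
    pose proof (sum_n_m_nonneg (fun n => x n ^ 2) p q ltac:(intros; nra)).
    unfold seg_sum in *; simpl in *. unfold eta. lra. }
  assert (Heta0 : 0 < eta) by (unfold eta; lra).
  (* As [eta <= 1], a dipole of size [del = eta / 6] costs [4 del + 2 del^2 <= eta]. *)
  set (del := eta / 6).
  assert (Hsmall : forall e, Rabs e = del -> 4 * Rabs e + 2 * e ^ 2 <= eta).
  { intros e He. rewrite <- (pow2_abs e), He. unfold del. nra. }
  pose proof (sqsum_noncovering_le x p q Hpq Hviol Hmin HB) as Hnc.
  assert (Hplus := in_BJ_of_Jsq_le _ (Jsq_le_add_dipole x p q del eta ltac:(lia) HB Hnc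
                     (Hsmall del ltac:(rewrite Rabs_right; unfold del; lra)))).
  assert (Hminus := in_BJ_of_Jsq_le _ (Jsq_le_add_dipole x p q (- del) eta ltac:(lia) HB Hnc
                      (Hsmall (- del) ltac:(rewrite Rabs_Ropp, Rabs_right; unfold del; lra)))).
  assert (Heq := Hext _ _ (/ 2) Hplus Hminus ltac:(lra)).
  assert (Hp := f_equal (fun f => f p) (Heq ltac:(intros n; unfold dipole;
                 destruct (Nat.eqb n p), (Nat.eqb n q); lra))).
  cbv beta in Hp. unfold dipole in Hp.
  rewrite Nat.eqb_refl, (proj2 (Nat.eqb_neq p q)) in Hp by lia. unfold del in Hp. lra.
Qed.

Lemma extreme_block_sq_le x : extreme_BJ x -> block_sq_le x.
Proof.
  intros Hext. assert (HB := Jsq_le_of_in_BJ x (proj1 Hext)).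
  assert (H : forall d a b, (b - a)%nat = d -> (a <= b)%nat ->
            (sum_n_m x a b) ^ 2 <= sum_n_m (fun k => x k ^ 2) a b).
  { intros d. induction d as [d IH] using lt_wf_ind. intros a b Hd Hab.
    destruct (Rle_dec ((sum_n_m x a b) ^ 2) (sum_n_m (fun k => x k ^ 2) a b)) as [Hle|Hgt]; auto.
    exfalso. apply Rnot_le_lt in Hgt.
    destruct (Nat.eq_dec a b) as [->|Hne]; [rewrite !sum_n_n in Hgt; lra|].
    apply (not_extreme_of_minimal_violation x a b ltac:(lia) HB Hgt); auto.
    intros [a' b'] Hv Hin. unfold seg_valid, strictly_inside, seg_sum in *; simpl in *.
    apply (IH (b' - a')%nat); lia. }
  intros a b Hab. now apply (H (b - a)%nat).
Qed.

(** * Part (1): restrictions of extreme points *)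

Lemma sum_n_m_restrict_seg (w : nat -> R) a b c e : (a <= b)%nat ->
  sum_n_m (fun n => if seg_in (c, e) n then w n else 0) a b =
  if (Nat.max a c <=? Nat.min b e)%nat then sum_n_m w (Nat.max a c) (Nat.min b e) else 0.
Proof.
  intros Hab.
  rewrite (sum_n_m_ext_loc _ (fun n => if seg_in (Nat.max a c, Nat.min b e) n then w n else 0)).
  2:{ intros n Hn. unfold seg_in; simpl.
      destruct (Nat.leb_spec c n), (Nat.leb_spec n e), (Nat.leb_spec (Nat.max a c) n),
        (Nat.leb_spec n (Nat.min b e)); simpl; reflexivity || lia. }
  destruct (Nat.leb_spec (Nat.max a c) (Nat.min b e)).
  - apply sum_n_m_indicator; lia.
  - apply sum_n_m_zero_loc. intros n Hn.
    now rewrite (proj2 (seg_in_false _ n)) by (simpl; lia).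
Qed.

Lemma block_sq_le_restrict x I : block_sq_le x -> block_sq_le (restrict x I).
Proof.
  intros Hx a b Hab. unfold restrict.
  set (e := match snd I with Some e => e | None => b end).
  assert (Hin : forall n, (a <= n <= b)%nat -> in_interval I n = seg_in (fst I, e) n).
  { intros n Hn. unfold in_interval, seg_in, e. destruct (snd I); simpl; auto.
    now rewrite (proj2 (Nat.leb_le n b)), Bool.andb_true_r by lia. }
  rewrite (sum_n_m_ext_loc _ (fun n => if seg_in (fst I, e) n then x n else 0))
    by (intros n Hn; now rewrite Hin).
  rewrite (sum_n_m_ext_loc (fun n => (if in_interval I n then x n else 0) ^ 2)
                           (fun n => if seg_in (fst I, e) n then x n ^ 2 else 0))
    by (intros n Hn; rewrite (Hin n Hn);
        destruct (seg_in (fst I, e) n); [reflexivity|apply pow_i; lia]).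
  rewrite !sum_n_m_restrict_seg by auto.
  destruct (_ <=? _)%nat eqn:E; [apply Hx; now apply Nat.leb_le in E|simpl; lra].
Qed.

Lemma extreme_Jnorm_restrict x I :
  extreme_BJ x -> Jnorm (restrict x I) = Finite (l2norm (restrict x I)).
Proof.
  intros Hext. apply Jnorm_block_sq_le.
  - now apply block_sq_le_restrict, extreme_block_sq_le.
  - apply ex_series_nonneg_bounded with 1; [intros; nra|]. intros N.
    eapply Rle_trans; [|apply (Jsq_le_partial_sq x 1 (Jsq_le_of_in_BJ x (proj1 Hext)) N)].
    apply sum_n_m_le. intros n. unfold restrict. destruct (in_interval I n); simpl; nra.
Qed.

Definition inFb (F : option nat) (i : nat) : bool :=
  match F with Some k => (i <? k)%nat | None => true end.

Lemma inFb_iff F i : inFb F i = true <-> inF F i.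
Proof. destruct F; simpl; [apply Nat.ltb_lt|tauto]. Qed.

Lemma inF_le F i j : inF F j -> (i <= j)%nat -> inF F i.
Proof. destruct F; simpl; auto; lia. Qed.

Lemma in_interval_fst I n : in_interval I n = true -> (fst I <= n)%nat.
Proof. unfold in_interval. intros H. apply andb_prop in H as [H _]. now apply Nat.leb_le. Qed.

Lemma in_interval_snd I e n : snd I = Some e -> in_interval I n = true -> (n <= e)%nat.
Proof.
  unfold in_interval. intros He H. rewrite He in H. apply andb_prop in H as [_ H].
  now apply Nat.leb_le.
Qed.

Lemma filter_inFb_seq F a n :
  List.Forall (inF F) (filter (inFb F) (seq a n)) /\ ForallOrdPairs lt (filter (inFb F) (seq a n)).
Proof.
  split.
  - rewrite Forall_forall. intros i Hi. apply filter_In in Hi. apply inFb_iff; tauto.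
  - apply ForallOrdPairs_filter, ForallOrdPairs_seq.
Qed.

Definition Fpartial (F : option nat) (c : nat -> R) (N : nat) : R :=
  lsum (fun i => if inFb F i then c i ^ 2 else 0) (seq 0 N).

Lemma Fpartial_mono F c N N' : (N <= N')%nat -> Fpartial F c N <= Fpartial F c N'.
Proof.
  intros H. unfold Fpartial. replace N' with (N + (N' - N))%nat by lia.
  rewrite seq_app, lsum_app.
  assert (0 <= lsum (fun i => if inFb F i then c i ^ 2 else 0) (seq (0 + N) (N' - N)))
    by (apply lsum_nonneg; intros; destruct inFb; nra).
  lra.
Qed.

Definition block_sum (x : nat -> R) (fam : nat -> interval) (i : nat) : R := isum x (fam i).

Lemma sumsq_interval_family x F fam a n :
  sumsq (map (isum x) (map fam (filter (inFb F) (seq a n)))) =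
  lsum (fun i => if inFb F i then block_sum x fam i ^ 2 else 0) (seq a n).
Proof. now rewrite map_map, sumsq_lsum, lsum_filter. Qed.

Lemma isum_split x a c o : (forall a, ex_series (fun k => x (a + k)%nat)) -> (a < c)%nat ->
  match o with Some e => (c <= S e)%nat | None => True end ->
  isum x (a, o) = sum_n_m x a (pred c) + isum x (c, o).
Proof.
  intros Hex Hac Ho. unfold isum; simpl. destruct o as [e|].
  - now apply sum_n_m_split.
  - rewrite (Series_incr_n _ (c - a)) by (auto; lia).
    rewrite <- sum_n_Reals, <- sum_n_m_as_sum_n.
    replace (a + pred (c - a))%nat with (pred c) by lia.
    f_equal. apply Series_ext. intros n. f_equal. lia.
Qed.

(** * The blocks of a norming family *)

Section IntervalFamily.

Variables (F : option nat) (fam : nat -> interval).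
Hypothesis Hfam : interval_family F fam.

Lemma interval_family_valid i : inF F i -> valid_interval (fam i).
Proof. apply (proj1 Hfam). Qed.

Lemma interval_family_gap d i : inF F (i + S d) ->
  exists e, snd (fam i) = Some e /\ (e < fst (fam (i + S d)))%nat.
Proof.
  destruct Hfam as [Hv Ho]. revert i; induction d as [|d IH]; intros i Hi.
  - rewrite Nat.add_1_r in *. specialize (Ho i (inF_le F i (S i) Hi ltac:(lia)) Hi).
    destruct (snd (fam i)) as [e|]; [now exists e|contradiction].
  - destruct (IH i (inF_le F (i + S d) _ Hi ltac:(lia))) as [e [He1 He2]]. exists e. split; auto.
    set (j := (i + S d)%nat) in *. replace (i + S (S d))%nat with (S j) in * by lia.
    assert (Hj : inF F j) by (eapply inF_le; eauto).
    specialize (Ho j Hj Hi). specialize (Hv j Hj). unfold valid_interval in Hv.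
    destruct (snd (fam j)); [lia|contradiction].
Qed.

Lemma interval_family_before i j n : (i < j)%nat -> inF F j ->
  in_interval (fam i) n = true -> (n < fst (fam j))%nat.
Proof.
  intros Hij Hj Hn. replace j with (i + S (j - S i))%nat in * by lia.
  destruct (interval_family_gap _ _ Hj) as [e [He1 He2]].
  pose proof (in_interval_snd _ _ _ He1 Hn). lia.
Qed.

Lemma interval_family_fst_lt i j : (i < j)%nat -> inF F j -> (fst (fam i) < fst (fam j))%nat.
Proof.
  intros Hij Hj. replace j with (i + S (j - S i))%nat in * by lia.
  destruct (interval_family_gap _ _ Hj) as [e [He1 He2]].
  pose proof (interval_family_valid i (inF_le F i _ Hj ltac:(lia))) as Hv.
  unfold valid_interval in Hv. rewrite He1 in Hv. lia.
Qed.

Lemma interval_family_fst_le i j : (i <= j)%nat -> inF F j -> (fst (fam i) <= fst (fam j))%nat.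
Proof.
  intros Hij Hj. destruct (Nat.eq_dec i j) as [->|Hne]; [lia|].
  pose proof (interval_family_fst_lt i j ltac:(lia) Hj). lia.
Qed.

Lemma interval_family_disjoint i j : (i < j)%nat -> inF F j -> disjoint_intervals (fam i) (fam j).
Proof.
  intros Hij Hj n [H1 H2]. apply (interval_family_before i j n Hij Hj) in H1.
  apply in_interval_fst in H2. lia.
Qed.

Lemma interval_family_indices L :
  List.Forall (inF F) L -> ForallOrdPairs lt L ->
  List.Forall valid_interval (map fam L) /\ ForallOrdPairs disjoint_intervals (map fam L).
Proof.
  intros HL Ho. split.
  - rewrite Forall_forall in *. intros I HI. apply in_map_iff in HI as [i [<- Hi]].
    apply interval_family_valid. auto.
  - apply (ForallOrdPairs_map lt disjoint_intervals fam (inF F)); auto.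
    intros i j _ Hj Hij. now apply interval_family_disjoint.
Qed.

Section NormingFamily.

Variable x : nat -> R.
Hypothesis HB : Jsq_le x 1.
Hypothesis Hnorm : Fsumsq F (block_sum x fam) = 1.

Lemma Fpartial_le_1 N : Fpartial F (block_sum x fam) N <= 1.
Proof.
  unfold Fpartial. rewrite <- sumsq_interval_family.
  destruct (filter_inFb_seq F 0 N) as [H1 H2].
  destruct (interval_family_indices _ H1 H2).
  now apply (sumsq_le_of_Jsq_le x 1).
Qed.

Lemma Fpartial_approx_1 eps : 0 < eps -> exists N, 1 - eps < Fpartial F (block_sum x fam) N.
Proof.
  intros He. pose proof Fpartial_le_1 as Hle1. destruct F as [k0|].
  - exists k0. unfold Fpartial. simpl in Hnorm.
    rewrite (lsum_ext _ (fun i => block_sum x fam i ^ 2)).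
    { change (lsum (fun i => block_sum x fam i ^ 2) (seq 0 k0) = 1) in Hnorm. lra. }
    intros i Hi. apply in_seq in Hi. simpl. now rewrite (proj2 (Nat.ltb_lt i k0)) by lia.
  - change (Series (fun i => block_sum x fam i ^ 2) = 1) in Hnorm.
    assert (Hpart : forall N,
              Fpartial None (block_sum x fam) (S N) = sum_n (fun i => block_sum x fam i ^ 2) N)
      by (intros N; unfold Fpartial; simpl inFb; now rewrite lsum_seq).
    assert (Hex : ex_series (fun i => block_sum x fam i ^ 2)).
    { apply (ex_series_nonneg_bounded _ 1); [intros; nra|].
      intros N. rewrite <- Hpart. apply Hle1. }
    pose proof (ex_series_lim _ Hex) as Hl. rewrite Hnorm in Hl.
    apply is_lim_seq_spec in Hl. destruct (Hl (mkposreal eps He)) as [N HN].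
    exists (S N). rewrite Hpart. specialize (HN N (le_n N)).
    apply Rabs_lt_between in HN. change (pos (mkposreal eps He)) with eps in HN. lra.
Qed.

(* Any point outside the family could be added to it as a singleton. *)
Lemma norming_vanishes_off n : (forall i, inF F i -> in_interval (fam i) n = false) -> x n = 0.
Proof.
  intros Hn.
  assert (Hle : forall N, Fpartial F (block_sum x fam) N + x n ^ 2 <= 1).
  { intros N. destruct (filter_inFb_seq F 0 N) as [H1 H2].
    destruct (interval_family_indices _ H1 H2) as [H3 H4].
    set (l := map fam (filter (inFb F) (seq 0 N)) ++ (n, Some n) :: nil).
    assert (Hv : List.Forall valid_interval l).
    { apply Forall_app; split; auto. constructor; auto. unfold valid_interval; simpl; lia. }
    assert (Hd : ForallOrdPairs disjoint_intervals l).
    { apply ForallOrdPairs_app; auto; [repeat constructor|].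
      intros I J HI [<-|[]]. apply in_map_iff in HI as [i [<- Hi]].
      apply filter_In in Hi as [_ Hi]. apply inFb_iff in Hi.
      intros m [Hm1 Hm2]. unfold in_interval in Hm2; simpl in Hm2.
      apply andb_prop in Hm2 as [Hm2 Hm3]. apply Nat.leb_le in Hm2, Hm3.
      replace m with n in Hm1 by lia. rewrite Hn in Hm1; [discriminate|auto]. }
    pose proof (sumsq_le_of_Jsq_le x 1 HB l Hv Hd) as H.
    unfold l in H. rewrite map_app, sumsq_app, sumsq_interval_family in H.
    replace (sumsq (map (isum x) ((n, Some n) :: nil))) with (x n ^ 2 + 0) in H
      by (unfold isum; simpl; now rewrite sum_n_n).
    unfold Fpartial. lra. }
  apply NNPP. intros Hx. assert (Hp : 0 < x n ^ 2) by (apply pow2_gt_0; auto).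
  destruct (Fpartial_approx_1 (x n ^ 2) Hp) as [N HN]. specialize (Hle N). lra.
Qed.

Lemma norming_gap_zero j e n : inF F (S j) -> snd (fam j) = Some e ->
  (e < n)%nat -> (n < fst (fam (S j)))%nat -> x n = 0.
Proof.
  intros Hj He Hn1 Hn2. apply norming_vanishes_off. intros i Hi.
  destruct (in_interval (fam i) n) eqn:E; auto. exfalso.
  destruct (lt_eq_lt_dec i j) as [[Hlt|<-]|Hgt].
  - apply (interval_family_before i j n Hlt (inF_le F j (S j) Hj ltac:(lia))) in E.
    pose proof (interval_family_valid j (inF_le F j (S j) Hj ltac:(lia))) as Hv.
    unfold valid_interval in Hv. rewrite He in Hv. lia.
  - pose proof (in_interval_snd _ _ _ He E). lia.
  - apply in_interval_fst in E. pose proof (interval_family_fst_le (S j) i ltac:(lia) Hi). lia.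
Qed.

Lemma sum_interval_then_gap j : inF F (S j) ->
  sum_n_m x (fst (fam j)) (pred (fst (fam (S j)))) = block_sum x fam j.
Proof.
  intros Hj. destruct (interval_family_gap 0 j ltac:(now rewrite Nat.add_1_r)) as [e [He Hlt]].
  rewrite Nat.add_1_r in Hlt.
  pose proof (interval_family_valid j (inF_le F j (S j) Hj ltac:(lia))) as Hv.
  unfold valid_interval in Hv. rewrite He in Hv.
  rewrite (sum_n_m_ChaslesR x _ e) by lia. rewrite (sum_n_m_zero_loc x (S e)).
  - unfold block_sum, isum. rewrite He. lra.
  - intros n Hn. apply (norming_gap_zero j e n); auto; lia.
Qed.

Lemma sum_hull_prefix i0 j : (i0 <= j)%nat -> inF F (S j) ->
  sum_n_m x (fst (fam i0)) (pred (fst (fam (S j)))) = sum_n_m (block_sum x fam) i0 j.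
Proof.
  intros Hij Hj. induction j as [|j IH].
  - replace i0 with 0%nat by lia. rewrite sum_n_n. apply sum_interval_then_gap; assumption.
  - destruct (Nat.eq_dec i0 (S j)) as [->|Hne].
    + rewrite sum_n_n. apply sum_interval_then_gap; assumption.
    + pose proof (interval_family_gap 0 (S j) ltac:(now rewrite Nat.add_1_r)) as [e [He Hlt]].
      rewrite Nat.add_1_r in Hlt.
      pose proof (interval_family_valid (S j) (inF_le F (S j) (S (S j)) Hj ltac:(lia))) as Hv.
      unfold valid_interval in Hv. rewrite He in Hv.
      pose proof (interval_family_fst_lt i0 (S j) ltac:(lia)
                    (inF_le F (S j) (S (S j)) Hj ltac:(lia))).
      rewrite (sum_n_m_split x _ (fst (fam (S j)))), IH, sum_interval_then_gap by
        (auto; try lia; eapply inF_le; eauto).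
      now rewrite sum_n_SmR by lia.
Qed.

Lemma isum_hull i0 i1 : (i0 <= i1)%nat -> inF F i1 ->
  isum x (fst (fam i0), snd (fam i1)) = sum_n_m (block_sum x fam) i0 i1.
Proof.
  intros Hi01 Hi1. pose proof (Jsq_le_ex_series x 1 HB) as Hex.
  destruct (Nat.eq_dec i0 i1) as [<-|Hne].
  - rewrite sum_n_n. unfold block_sum. now destruct (fam i0).
  - destruct i1 as [|j]; [lia|].
    destruct (interval_family_gap 0 j ltac:(now rewrite Nat.add_1_r)) as [e [He Hlt]].
    rewrite Nat.add_1_r in Hlt.
    pose proof (interval_family_valid j (inF_le F j (S j) Hi1 ltac:(lia))) as Hv.
    pose proof (interval_family_valid (S j) Hi1) as Hv'.
    unfold valid_interval in Hv, Hv'. rewrite He in Hv.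
    pose proof (interval_family_fst_le i0 j ltac:(lia) (inF_le F j (S j) Hi1 ltac:(lia))).
    rewrite (isum_split x _ (fst (fam (S j)))), sum_hull_prefix by
      (auto; try lia; destruct (snd (fam (S j))); auto; lia).
    rewrite sum_n_SmR by lia. unfold block_sum. now destruct (fam (S j)).
Qed.

Definition hull_family i0 i1 N : list interval :=
  map fam (filter (inFb F) (seq 0 i0)) ++ (fst (fam i0), snd (fam i1)) ::
  map fam (filter (inFb F) (seq (S i1) (N - S i1))).

Lemma hull_family_disjoint i0 i1 N : (i0 <= i1)%nat -> inF F i1 ->
  List.Forall valid_interval (hull_family i0 i1 N) /\
  ForallOrdPairs disjoint_intervals (hull_family i0 i1 N).
Proof.
  intros H01 Hi1. unfold hull_family.
  destruct (filter_inFb_seq F 0 i0) as [HL1a HL1b].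
  destruct (filter_inFb_seq F (S i1) (N - S i1)) as [HL2a HL2b].
  destruct (interval_family_indices _ HL1a HL1b) as [HV1 HD1].
  destruct (interval_family_indices _ HL2a HL2b) as [HV2 HD2].
  assert (Hi0 : inF F i0) by (apply (inF_le F i0 i1); auto).
  assert (Hidx : forall a n j, In j (filter (inFb F) (seq a n)) -> (a <= j < a + n)%nat /\ inF F j).
  { intros a n j Hj. apply filter_In in Hj as [Hj1 Hj2]. apply in_seq in Hj1.
    apply inFb_iff in Hj2. auto. }
  assert (Hhull : forall n, in_interval (fst (fam i0), snd (fam i1)) n = true ->
            (fst (fam i0) <= n)%nat /\
            (forall j, (i1 < j)%nat -> inF F j -> (n < fst (fam j))%nat)).
  { intros n Hn. split; [now apply in_interval_fst in Hn|]. intros j Hj1 Hj2.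
    replace j with (i1 + S (j - S i1))%nat in Hj2 |- * by lia.
    destruct (interval_family_gap _ _ Hj2) as [e [He1 He2]].
    pose proof (in_interval_snd (fst (fam i0), snd (fam i1)) e n He1 Hn). lia. }
  split.
  - apply Forall_app; split; auto. constructor; auto. unfold valid_interval; simpl.
    pose proof (interval_family_valid i1 Hi1) as Hv. unfold valid_interval in Hv.
    destruct (snd (fam i1)) as [e|]; auto.
    pose proof (interval_family_fst_le i0 i1 H01 Hi1). lia.
  - apply ForallOrdPairs_app; auto.
    + constructor; auto. rewrite Forall_forall. intros I HI. apply in_map_iff in HI as [j [<- Hj]].
      destruct (Hidx _ _ _ Hj) as [Hj1 Hj2].
      intros n [Hn1 Hn2]. apply Hhull in Hn1 as [_ Hn1]. specialize (Hn1 j ltac:(lia) Hj2).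
      apply in_interval_fst in Hn2. lia.
    + intros I J HI HJ. apply in_map_iff in HI as [i [<- Hi]].
      destruct (Hidx _ _ _ Hi) as [Hi1' Hi2'].
      destruct HJ as [<-|HJ].
      * intros n [Hn1 Hn2]. apply (interval_family_before i i0 n ltac:(lia) Hi0) in Hn1.
        apply Hhull in Hn2. lia.
      * apply in_map_iff in HJ as [j [<- Hj]]. destruct (Hidx _ _ _ Hj) as [Hj1 Hj2].
        apply interval_family_disjoint; auto. lia.
Qed.

Lemma sumsq_hull_family i0 i1 N : (i0 <= i1)%nat -> inF F i1 -> (S i1 <= N)%nat ->
  sumsq (map (isum x) (hull_family i0 i1 N)) =
  Fpartial F (block_sum x fam) N - sum_n_m (fun i => block_sum x fam i ^ 2) i0 i1 +
  (sum_n_m (block_sum x fam) i0 i1) ^ 2.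
Proof.
  intros H01 Hi1 HN. unfold hull_family.
  rewrite map_app, sumsq_app. cbn [map sumsq fold_right].
  rewrite !sumsq_interval_family, isum_hull by auto.
  assert (Hseq : seq 0 N = seq 0 i0 ++ seq i0 (S (i1 - i0)) ++ seq (S i1) (N - S i1)).
  { replace N with (i0 + (S (i1 - i0) + (N - S i1)))%nat at 1 by lia.
    rewrite !seq_app, Nat.add_0_l. do 3 f_equal. lia. }
  unfold Fpartial. rewrite Hseq, !lsum_app.
  rewrite (lsum_ext _ (fun i => block_sum x fam i ^ 2) (seq i0 (S (i1 - i0)))).
  2:{ intros i Hi. apply in_seq in Hi. rewrite (proj2 (inFb_iff F i)); auto.
      apply (inF_le F i i1); auto; lia. }
  rewrite lsum_seq. replace (i0 + (i1 - i0))%nat with i1 by lia. lra.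
Qed.

Lemma norming_block_sq_le i0 i1 : (i0 <= i1)%nat -> inF F i1 ->
  (sum_n_m (block_sum x fam) i0 i1) ^ 2 <= sum_n_m (fun i => block_sum x fam i ^ 2) i0 i1.
Proof.
  intros H01 Hi1. apply Rnot_lt_le. intros Hc.
  destruct (Fpartial_approx_1 ((sum_n_m (block_sum x fam) i0 i1) ^ 2 -
                              sum_n_m (fun i => block_sum x fam i ^ 2) i0 i1))
    as [N HN]; [lra|].
  set (N' := Nat.max N (S i1)).
  pose proof (Fpartial_mono F (block_sum x fam) N N' ltac:(lia)).
  destruct (hull_family_disjoint i0 i1 N' H01 Hi1) as [Hv Hd].
  pose proof (sumsq_le_of_Jsq_le x 1 HB _ Hv Hd) as Hle.
  rewrite sumsq_hull_family in Hle by (auto; lia). lra.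
Qed.

End NormingFamily.

End IntervalFamily.

(** * Part (2): spreading a norming family out on the unit vectors *)

Lemma ex_least_nat (P : nat -> Prop) :
  (exists n, P n) -> exists m, P m /\ forall j, P j -> (m <= j)%nat.
Proof.
  intros [n Hn]. apply NNPP. intros Hnone.
  assert (H : forall n j, (j <= n)%nat -> ~ P j).
  { intros n'. induction n' as [n' IH] using lt_wf_ind. intros j Hj Pj. apply Hnone.
    exists j. split; auto. intros j' Pj'. destruct (le_lt_dec j j'); auto.
    exfalso. apply (IH j' ltac:(lia) j'); auto. }
  exact (H n n (le_n n) Hn).
Qed.

Lemma ex_greatest_nat (P : nat -> Prop) M : (exists n, P n) -> (forall j, P j -> (j <= M)%nat) ->
  exists m, P m /\ forall j, P j -> (j <= m)%nat.
Proof.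
  revert P. induction M as [|M IH]; intros P [n Hn] HM.
  - exists 0%nat. pose proof (HM n Hn). replace n with 0%nat in Hn by lia. auto.
  - destruct (classic (P (S M))) as [HS|HS]; [now exists (S M)|].
    apply IH; [now exists n|]. intros j Hj. pose proof (HM j Hj).
    destruct (Nat.eq_dec j (S M)) as [->|]; [contradiction|lia].
Qed.

Section Spread.

Variables (F : option nat) (k : nat -> nat) (c y : nat -> R).
Hypothesis Hk : forall i j, inF F i -> inF F j -> (i < j)%nat -> (k i < k j)%nat.
Hypothesis Hy : is_sum_basis F c k y.

Lemma spread_index_ge i : inF F i -> (i <= k i)%nat.
Proof.
  induction i as [|i IH]; intros Hi; [lia|].
  assert (Hi' : inF F i) by (apply (inF_le F i (S i)); auto).
  pose proof (Hk i (S i) Hi' Hi ltac:(lia)). specialize (IH Hi'). lia.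
Qed.

Lemma spread_index_mono i j : (i <= j)%nat -> inF F j -> (k i <= k j)%nat.
Proof.
  intros Hij Hj. destruct (Nat.eq_dec i j) as [->|Hne]; [lia|].
  pose proof (Hk i j (inF_le F i j Hj Hij) Hj ltac:(lia)). lia.
Qed.

Definition lands_in a b i : bool := (inFb F i && (a <=? k i) && (k i <=? b))%bool.

Lemma lands_in_iff a b i : lands_in a b i = true <-> inF F i /\ (a <= k i <= b)%nat.
Proof. unfold lands_in. rewrite !Bool.andb_true_iff, inFb_iff, !Nat.leb_le. tauto. Qed.

Lemma spread_index_inj i j : inF F i -> inF F j -> k i = k j -> i = j.
Proof.
  intros Hi Hj Hij. destruct (lt_eq_lt_dec i j) as [[Hlt|]|Hlt]; auto.
  - pose proof (Hk i j Hi Hj Hlt). lia.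
  - pose proof (Hk j i Hj Hi Hlt). lia.
Qed.

Lemma sum_spread_point (h : R -> R) n M : h 0 = 0 -> (n <= M)%nat ->
  sum_n_m (fun i => if lands_in n n i then h (c i) else 0) 0 M = h (y n).
Proof.
  intros Hh HnM. destruct Hy as [Hy1 Hy2].
  destruct (classic (exists i, inF F i /\ k i = n)) as [[i [Hi Hki]]|Hnone].
  - assert (Honly : forall j, j <> i -> (if lands_in n n j then h (c j) else 0) = 0).
    { intros j Hj. destruct (lands_in n n j) eqn:E; auto.
      apply lands_in_iff in E as [Hj' Hkj].
      exfalso. apply Hj, spread_index_inj; auto. lia. }
    pose proof (spread_index_ge i Hi).
    rewrite (sum_n_m_single _ i) by (auto; lia).
    rewrite (proj2 (lands_in_iff n n i)) by (split; auto; lia).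
    now rewrite <- Hki, Hy1.
  - rewrite Hy2, Hh by (intros i Hi Hki; apply Hnone; eauto).
    apply sum_n_m_zero_loc. intros j _. destruct (lands_in n n j) eqn:E; auto.
    apply lands_in_iff in E as [Hj Hkj]. exfalso. apply Hnone. exists j. split; auto; lia.
Qed.

Lemma sum_spread (h : R -> R) a b M : h 0 = 0 -> (b <= M)%nat ->
  sum_n_m (fun n => h (y n)) a b = sum_n_m (fun i => if lands_in a b i then h (c i) else 0) 0 M.
Proof.
  intros Hh. revert a M. induction b as [|b IH]; intros a M HM.
  - destruct a.
    + rewrite sum_n_n, <- (sum_spread_point h 0 M Hh HM). reflexivity.
    + rewrite sum_n_m_emptyR by lia. symmetry. apply sum_n_m_zero_loc. intros i _.
      destruct (lands_in (S a) 0 i) eqn:E; auto. apply lands_in_iff in E. lia.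
  - destruct (le_lt_dec a (S b)) as [Ha|Ha].
    + rewrite sum_n_SmR, (IH a M), <- (sum_spread_point h (S b) M Hh HM), <- sum_n_m_plusR by lia.
      apply sum_n_m_ext. intros i. unfold lands_in.
      destruct (inFb F i); [|simpl; lra]. rewrite !Bool.andb_true_l.
      destruct (Nat.leb_spec a (k i)), (Nat.leb_spec (k i) b), (Nat.leb_spec (k i) (S b)),
        (Nat.leb_spec (S b) (k i)); try lia; simpl; lra.
    + rewrite sum_n_m_emptyR by lia. symmetry. apply sum_n_m_zero_loc. intros i _.
      destruct (lands_in a (S b) i) eqn:E; auto. apply lands_in_iff in E. lia.
Qed.

Lemma lands_in_interval a b :
  (forall i, lands_in a b i = false) \/
  exists i0 i1, (i0 <= i1 <= b)%nat /\ inF F i1 /\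
    forall i, lands_in a b i = true <-> (i0 <= i <= i1)%nat.
Proof.
  set (P := fun i => lands_in a b i = true).
  destruct (classic (exists i, P i)) as [Hex|Hnone].
  2:{ left. intros i. destruct (lands_in a b i) eqn:E; auto. exfalso. apply Hnone. now exists i. }
  right. assert (HPb : forall j, P j -> (j <= b)%nat).
  { intros j Hj. apply lands_in_iff in Hj as [Hj Hkj]. pose proof (spread_index_ge j Hj). lia. }
  destruct (ex_least_nat P Hex) as [i0 [Pi0 Hi0]].
  destruct (ex_greatest_nat P b Hex HPb) as [i1 [Pi1 Hi1]].
  pose proof (Hi0 i1 Pi1). pose proof (HPb i1 Pi1).
  exists i0, i1. unfold P in *. apply lands_in_iff in Pi0 as [A0 B0], Pi1 as [A1 B1].
  split; [lia|]. split; [exact A1|]. intros i. split.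
  { intros Pi. split; [apply Hi0|apply Hi1]; exact Pi. }
  intros [Hj0 Hj1]. assert (Hj : inF F i) by (apply (inF_le F i i1); auto).
  pose proof (spread_index_mono i0 i Hj0 Hj). pose proof (spread_index_mono i i1 Hj1 A1).
  apply lands_in_iff. split; auto; lia.
Qed.

Lemma block_sq_le_spread :
  (forall i0 i1, (i0 <= i1)%nat -> inF F i1 ->
     (sum_n_m c i0 i1) ^ 2 <= sum_n_m (fun i => c i ^ 2) i0 i1) ->
  block_sq_le y.
Proof.
  intros Hc a b Hab.
  rewrite (sum_n_m_ext y (fun n => (fun r => r) (y n))) by reflexivity.
  rewrite (sum_spread (fun r => r) a b b), (sum_spread (fun r => r ^ 2) a b b)
    by (auto; simpl; ring).
  destruct (lands_in_interval a b) as [Hnone|[i0 [i1 [Hi [Hi1 Hint]]]]].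
  - rewrite !sum_n_m_zero_loc by (intros i _; now rewrite Hnone). simpl; lra.
  - assert (Hind : forall f : nat -> R,
              sum_n_m (fun i => if lands_in a b i then f i else 0) 0 b = sum_n_m f i0 i1).
    { intros f. rewrite <- (sum_n_m_indicator f 0 b i0 i1) by lia. apply sum_n_m_ext. intros j.
      destruct (lands_in a b j) eqn:E, (seg_in (i0, i1) j) eqn:E2; auto.
      - apply Hint in E. apply seg_in_false in E2. simpl in E2. lia.
      - apply seg_in_iff in E2. simpl in E2. apply Hint in E2. congruence. }
    rewrite (Hind c), (Hind (fun i => c i ^ 2)). apply Hc; [lia|auto].
Qed.

Lemma is_series_spread_sq :
  (forall N, Fpartial F c N <= 1) ->
  (forall eps, 0 < eps -> exists N, 1 - eps < Fpartial F c N) ->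
  is_series (fun n => y n ^ 2) 1.
Proof.
  intros Hle1 Happrox.
  set (f := fun N i => if lands_in 0 N i then c i ^ 2 else 0).
  assert (Hspread : forall N, sum_n (fun n => y n ^ 2) N = lsum (f N) (seq 0 (S N))).
  { intros N. unfold sum_n. rewrite lsum_seq.
    apply (sum_spread (fun r => r ^ 2) 0 N N); [simpl; ring|lia]. }
  assert (Hup : forall N, sum_n (fun n => y n ^ 2) N <= 1).
  { intros N. rewrite Hspread. eapply Rle_trans; [|apply (Hle1 (S N))]. apply lsum_le.
    intros i _. unfold f, lands_in. destruct (inFb F i); simpl; [|lra].
    destruct (k i <=? N)%nat; simpl; nra. }
  assert (Hlow : forall eps, 0 < eps -> exists N1, forall N, (N1 <= N)%nat ->
                   1 - eps < sum_n (fun n => y n ^ 2) N).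
  { intros eps He. destruct (Happrox eps He) as [N0 HN0].
    set (K := fold_right Nat.max 0%nat (map k (seq 0 N0))).
    assert (HK : forall i, In i (seq 0 N0) -> (k i <= K)%nat).
    { unfold K. intros i. induction (seq 0 N0) as [|a l IH]; simpl; [tauto|].
      intros [->|Hi]; [lia|]. specialize (IH Hi). lia. }
    exists (Nat.max K N0). intros N HN. rewrite Hspread.
    replace (S N) with (N0 + (S N - N0))%nat by lia. rewrite seq_app, lsum_app.
    rewrite (lsum_ext (f N) (fun i => if inFb F i then c i ^ 2 else 0) (seq 0 N0)).
    2:{ intros i Hi. specialize (HK i Hi). unfold f, lands_in.
        rewrite (proj2 (Nat.leb_le 0 (k i))), (proj2 (Nat.leb_le (k i) N)) by lia.
        now rewrite !Bool.andb_true_r. }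
    assert (0 <= lsum (f N) (seq (0 + N0) (S N - N0)))
      by (apply lsum_nonneg; intros i _; unfold f; destruct (lands_in 0 N i); nra).
    unfold Fpartial in HN0. lra. }
  change (is_lim_seq (sum_n (fun n => y n ^ 2)) 1). apply is_lim_seq_spec.
  intros eps. destruct (Hlow eps (cond_pos eps)) as [N1 HN1].
  exists N1. intros N HN. specialize (HN1 N HN). specialize (Hup N).
  apply Rabs_lt_between. lra.
Qed.

End Spread.

(* Strict convexity of the l2 ball: if [y = t u + (1 - t) v] then
   [t (1 - t) |u - v|^2 = t |u|^2 + (1 - t) |v|^2 - |y|^2], which is [<= 0]
   when [|y| = 1] and [|u|, |v| <= 1]. *)
Lemma l2_unit_sphere_extreme (y u v : nat -> R) t :
  is_series (fun n => y n ^ 2) 1 ->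
  (forall N, sum_n (fun n => u n ^ 2) N <= 1) -> (forall N, sum_n (fun n => v n ^ 2) N <= 1) ->
  0 < t < 1 -> (forall n, y n = t * u n + (1 - t) * v n) -> u = v.
Proof.
  intros Hs Hu Hv Ht Hy. apply functional_extensionality. intros n0. apply NNPP. intros Hne.
  set (d := t * (1 - t) * (u n0 - v n0) ^ 2).
  assert (Hd : 0 < d) by (apply Rmult_lt_0_compat; [nra|apply pow2_gt_0; lra]).
  assert (Hgap : forall N, (n0 <= N)%nat -> d <= 1 - sum_n (fun n => y n ^ 2) N).
  { intros N HN.
    assert (Hid : sum_n (fun n => t * (1 - t) * (u n - v n) ^ 2) N =
                  t * sum_n (fun n => u n ^ 2) N + ((1 - t) * sum_n (fun n => v n ^ 2) N +
                  (-1) * sum_n (fun n => y n ^ 2) N)).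
    { unfold sum_n. rewrite <- !sum_n_m_multR, <- !sum_n_m_plusR.
      apply sum_n_m_extR. intros n. rewrite Hy. ring. }
    pose proof (sum_n_m_term_le (fun n => t * (1 - t) * (u n - v n) ^ 2) n0 0 N
                  ltac:(intros; apply Rmult_le_pos; [nra|apply pow2_ge_0]) ltac:(lia)).
    specialize (Hu N). specialize (Hv N). unfold sum_n, d in *. nra. }
  assert (Hl : is_lim_seq (sum_n (fun n => y n ^ 2)) 1) by exact Hs.
  apply is_lim_seq_spec in Hl. destruct (Hl (mkposreal d Hd)) as [N HN].
  specialize (HN (Nat.max N n0) ltac:(lia)). specialize (Hgap (Nat.max N n0) ltac:(lia)).
  change (pos (mkposreal d Hd)) with d in HN. apply Rabs_lt_between in HN. lra.
Qed.

Lemma norming_Fsumsq x F fam : Jnorm x = Finite 1 -> norming_family x F fam ->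
  Fsumsq F (block_sum x fam) = 1.
Proof.
  intros hx [_ Hn]. rewrite hx in Hn. injection Hn as Hn.
  change (fun i => isum x (fam i)) with (block_sum x fam) in Hn.
  set (s := Fsumsq F (block_sum x fam)) in *.
  destruct (Rle_dec s 0) as [Hle|Hlt].
  - rewrite sqrt_neg_0 in Hn by auto. lra.
  - rewrite <- (sqrt_sqrt s) by lra. rewrite <- Hn. ring.
Qed.

Lemma extreme_spread_norming x F fam k y : Jnorm x = Finite 1 -> norming_family x F fam ->
  (forall i j, inF F i -> inF F j -> (i < j)%nat -> (k i < k j)%nat) ->
  is_sum_basis F (fun i => isum x (fam i)) k y -> extreme_BJ y.
Proof.
  intros hx Hn Hk Hy.
  assert (HB : Jsq_le x 1) by (apply Jsq_le_of_in_BJ; unfold in_BJ; rewrite hx; simpl; lra).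
  pose proof (norming_Fsumsq x F fam hx Hn) as Hs. destruct Hn as [Hfam _].
  assert (Hser : is_series (fun n => y n ^ 2) 1).
  { apply (is_series_spread_sq F k _ y Hk Hy).
    - exact (Fpartial_le_1 F fam Hfam x HB).
    - exact (Fpartial_approx_1 F fam Hfam x HB Hs). }
  assert (HJ : Jnorm y = Finite 1).
  { rewrite Jnorm_block_sq_le.
    - now rewrite (is_series_unique _ _ Hser), sqrt_1.
    - apply (block_sq_le_spread F k _ y Hk Hy). intros i0 i1.
      apply (norming_block_sq_le F fam Hfam x HB Hs).
    - now exists 1. }
  split; [unfold in_BJ; rewrite HJ; simpl; lra|].
  intros u v t Hu Hv Ht Hyuv. apply (l2_unit_sphere_extreme y u v t Hser); auto.
  - apply Jsq_le_partial_sq, Jsq_le_of_in_BJ, Hu.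
  - apply Jsq_le_partial_sq, Jsq_le_of_in_BJ, Hv.
Qed.

Theorem corollary3p17 (x : nat -> R) (hx : Jnorm x = Finite 1) :
  (extreme_BJ x ->
     forall I : interval, valid_interval I ->
       Jnorm (restrict x I) = Finite (l2norm (restrict x I)))
  /\
  (forall (F : option nat) (fam : nat -> interval),
     norming_family x F fam ->
     forall k : nat -> nat,
       (forall i j, inF F i -> inF F j -> (i < j)%nat -> (k i < k j)%nat) ->
       forall y : nat -> R,
         is_sum_basis F (fun i => isum x (fam i)) k y ->
         extreme_BJ y).
Proof.
  split.
  - intros Hext I _. now apply extreme_Jnorm_restrict.
  - intros F fam Hn k Hk y Hy. now apply (extreme_spread_norming x F fam k).
Qed.
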